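(* The groups $L^i_r$ ($i\in\{1,2,3,4,6\}$, $r\in\mathbb N_{>0}$) and $L^{j,+}_r$ ($j\in\{2,3,4\}$, $r$ as required in their definition) are pairwise non-isomorphic discrete oscillator groups, and every discrete oscillator group is isomorphic to one of them. More precisely, let $L=H_1^r(\mathbb Z)\rtimes_S\mathbb Z\delta$ be a discrete oscillator group with $\bar S=(s_{ij})\in\{S_1,S_2,S_3,S_4,S_6\}$, $S(\alpha)=\alpha^{s_{11}}\beta^{s_{21}}\gamma^k$, $S(\beta)=\alpha^{s_{12}}\beta^{s_{22}}\gamma^l$, $S(\gamma)=\gamma$. Then: (i) if $\bar S=I_2$, $L\cong L^1_{r_0}$ with $r_0=\gcd(r,k,l)$; (ii) if $\bar S=-I_2$, $L\cong L^2_r$ if $r$ is odd or $k$ and $l$ are both even, and $L\cong L^{2,+}_r$ otherwise; (iii) if $\bar S=S_3$, $L\cong L^3_r$ if $3\nmid r$ or $k\equiv l\bmod 3$, and $L\cong L^{3,+}_r$ otherwise; (iv) if $\bar S=S_4$, $L\cong L^4_r$ if $r$ is odd or $k\equiv l\bmod 2$, and $L\cong L^{4,+}_r$ otherwise; (v) if $\bar S=S_6$, $L\cong L^6_r$.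
   Context: For $r\in\mathbb N_{>0}$ the discrete Heisenberg group is $H_1^r(\mathbb Z)=\langle\alpha,\beta,\gamma\mid \alpha\beta\alpha^{-1}\beta^{-1}=\gamma^r,\ \alpha\gamma=\gamma\alpha,\ \beta\gamma=\gamma\beta\rangle$. A discrete oscillator group is a semidirect product $H_1^r(\mathbb Z)\rtimes_S\mathbb Z\delta$ where $\delta$ acts by an automorphism $S$ ($\delta x\delta^{-1}=S(x)$) whose induced map $\bar S$ on $H_1^r(\mathbb Z)/Z(H_1^r(\mathbb Z))\cong\mathbb Z^2$ (basis: classes of $\alpha,\beta$) is conjugate in $\mathrm{GL}(2,\mathbb R)$ to a rotation. Matrices: $S_1=I_2$, $S_2=-I_2$, $S_3=\begin{pmatrix}0&-1\\1&-1\end{pmatrix}$, $S_4=\begin{pmatrix}0&-1\\1&0\end{pmatrix}$, $S_6=\begin{pmatrix}1&-1\\1&0\end{pmatrix}$. The groups $L^i_r$, $L^{j,+}_r$ are $H_1^r(\mathbb Z)\rtimes_S\mathbb Z\delta$ with $S(\gamma)=\gamma$ and $(S(\alpha),S(\beta))$ given by: $L^1_r$: $(\alpha,\beta)$; $L^2_r$: $(\alpha^{-1},\beta^{-1})$; $L^{2,+}_r$ ($r$ even): $(\alpha^{-1}\gamma,\beta^{-1}\gamma^{-1})$; $L^3_r$: $(\beta\gamma^r,\beta^{-1}\alpha^{-1})$; $L^{3,+}_r$ ($3\mid r$): $(\beta\gamma^{r-1},\beta^{-1}\alpha^{-1}\gamma)$; $L^4_r$: $(\beta,\alpha^{-1})$;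 $L^{4,+}_r$ ($r$ even): $(\beta\gamma,\alpha^{-1})$; $L^6_r$: $(\alpha\beta,\alpha^{-1})$. *)

From Stdlib Require Import ZArith Reals.

(* ---------- The discrete Heisenberg group H_1^r(Z) ----------
   An element (a,b,c) : Z*Z*Z stands for the normal form alpha^a beta^b gamma^c.
   From alpha beta = gamma^r beta alpha one gets
     beta^b alpha^a' = alpha^a' beta^b gamma^(-r a' b),
   hence the multiplication below. *)
Definition H : Type := (Z * Z * Z)%type.

Definition hmul (r : Z) (x y : H) : H :=
  let '(a, b, c) := x in
  let '(a', b', c') := y in
  ((a + a')%Z, (b + b')%Z, (c + c' - r * a' * b)%Z).

Definition hone : H := (0%Z, 0%Z, 0%Z).
Definition al : H := (1%Z, 0%Z, 0%Z).
Definition be : H := (0%Z, 1%Z, 0%Z).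
Definition ga : H := (0%Z, 0%Z, 1%Z).

Definition hpow (r : Z) (x : H) (n : Z) : H :=
  let '(a, b, c) := x in
  ((n * a)%Z, (n * b)%Z, (n * c - r * a * b * ((n * (n - 1)) / 2))%Z).

Definition phi (r : Z) (u v : H) (x : H) : H :=
  let '(a, b, c) := x in
  hmul r (hmul r (hpow r u a) (hpow r v b)) (0%Z, 0%Z, c).

Definition hz (x : H) : Z := let '(_, _, c) := x in c.
Definition hx (x : H) : Z := let '(a, _, _) := x in a.
Definition hy (x : H) : Z := let '(_, b, _) := x in b.

(* Images of alpha, beta under the inverse of phi r u v, when the induced
   matrix [[u1, v1],[u2, v2]] has determinant 1: the linear part is the
   inverse matrix, the gamma-exponent is chosen so that phi r u v maps the
   result back to alpha (resp. beta). *)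
Definition inv_u (r : Z) (u v : H) : H :=
  (hy v, (- hy u)%Z, (- hz (phi r u v (hy v, (- hy u)%Z, 0%Z)))%Z).
Definition inv_v (r : Z) (u v : H) : H :=
  ((- hx v)%Z, hx u, (- hz (phi r u v ((- hx v)%Z, hx u, 0%Z)))%Z).

(* ---------- Semidirect products H_1^r(Z) x|_S Z delta ----------
   Elements (h, n) stand for h delta^n; delta h delta^-1 = S h, so
   (h delta^n)(h' delta^n') = h S^n(h') delta^(n+n'). *)
Definition iterZ (S T : H -> H) (n : Z) (h : H) : H :=
  match n with
  | Z0 => h
  | Zpos p => Pos.iter S h p
  | Zneg p => Pos.iter T h p
  end.

Definition G : Type := (H * Z)%type.

Definition sdmul (r : Z) (S T : H -> H) (x y : G) : G :=
  let '(h, n) := x in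
  let '(h', n') := y in
  (hmul r h (iterZ S T n h'), (n + n')%Z).

Definition haut (r : Z) (S T : H -> H) : Prop :=
  (forall x y, S (hmul r x y) = hmul r (S x) (S y)) /\
  (forall x, T (S x) = x) /\ (forall x, S (T x) = x).

Definition is_iso (m1 m2 : G -> G -> G) (f : G -> G) : Prop :=
  (forall x y, f (m1 x y) = m2 (f x) (f y)) /\
  exists g : G -> G, (forall x, g (f x) = x) /\ (forall y, f (g y) = y).

Definition iso (m1 m2 : G -> G -> G) : Prop := exists f, is_iso m1 m2 f.

(* matrix of the induced map bar S on H/Z(H) = Z^2 (basis: classes of alpha, beta):
   column 1 = class of S(alpha), column 2 = class of S(beta) *)
Definition sbar11 (S : H -> H) : Z := hx (S al).
Definition sbar21 (S : H -> H) : Z := hy (S al).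
Definition sbar12 (S : H -> H) : Z := hx (S be).
Definition sbar22 (S : H -> H) : Z := hy (S be).

Definition conj_to_rotation (m11 m12 m21 m22 : Z) : Prop :=
  exists (p11 p12 p21 p22 t : R),
    (p11 * p22 - p12 * p21 <> 0)%R /\
    (p11 * IZR m11 + p12 * IZR m21 = cos t * p11 - sin t * p21)%R /\
    (p11 * IZR m12 + p12 * IZR m22 = cos t * p12 - sin t * p22)%R /\
    (p21 * IZR m11 + p22 * IZR m21 = sin t * p11 + cos t * p21)%R /\
    (p21 * IZR m12 + p22 * IZR m22 = sin t * p12 + cos t * p22)%R.

Definition osc_data (r : Z) (S T : H -> H) : Prop :=
  (0 < r)%Z /\ haut r S T /\
  conj_to_rotation (sbar11 S) (sbar12 S) (sbar21 S) (sbar22 S).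

Inductive lab : Type := L1 | L2 | L2p | L3 | L3p | L4 | L4p | L6.

Definition lab_valid (i : lab) (r : Z) : Prop :=
  (0 < r)%Z /\
  match i with
  | L2p | L4p => Z.Even r
  | L3p => (3 | r)%Z
  | _ => True
  end.

Definition lab_gens (i : lab) (r : Z) : H * H :=
  let w := hmul r in
  let p := hpow r in
  match i with
  | L1  => (al, be)
  | L2  => (p al (-1)%Z, p be (-1)%Z)
  | L2p => (w (p al (-1)%Z) ga, w (p be (-1)%Z) (p ga (-1)%Z))
  | L3  => (w be (p ga r), w (p be (-1)%Z) (p al (-1)%Z))
  | L3p => (w be (p ga (r - 1)%Z), w (w (p be (-1)%Z) (p al (-1)%Z)) ga)
  | L4  => (be, p al (-1)%Z)
  | L4p => (w be ga, p al (-1)%Z)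
  | L6  => (w al be, p al (-1)%Z)
  end%Z.

Definition lab_S (i : lab) (r : Z) : H -> H :=
  phi r (fst (lab_gens i r)) (snd (lab_gens i r)).
Definition lab_T (i : lab) (r : Z) : H -> H :=
  phi r (inv_u r (fst (lab_gens i r)) (snd (lab_gens i r)))
        (inv_v r (fst (lab_gens i r)) (snd (lab_gens i r))).

Definition Lgrp (i : lab) (r : Z) : G -> G -> G := sdmul r (lab_S i r) (lab_T i r).

(* Write L = H_1^r(Z) x|_S Z delta.  The matrix of S on H/Z(H) = Z^2 is conjugate to a
   rotation, so it has determinant 1 (hence S fixes gamma) and trace in {-2, ..., 2}.
   Trace 2 or -2 forces S = I or -I; otherwise balancing the diagonal and swapping the
   off-diagonal entries conjugates it in SL(2, Z) to S3, S4, S6 or an inverse, and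
   inverses are absorbed by delta |-> delta^-1.  With the matrix fixed, a change of
   generators of H together with replacing delta by h0 delta moves the gamma-exponents
   (k, l) of S(alpha), S(beta) to the listed representatives, which only depend on k, l
   modulo 2 or 3.  For S = I, L is a central extension of Z^3 whose cocycle is reduced
   by SL(3, Z) to the commutator form with r0 = gcd(r, k, l).

   Conversely, if S <> I then H is the common kernel of all homomorphisms L -> Z, so an
   isomorphism L^i_r -> L^j_s maps H onto H and delta to h0 delta^(+-1); comparing
   centres and commutators gives r = s, and the induced matrices are conjugate in
   GL(2, Z), so the traces agree.  The pairs L^j, L^{j,+} are then told apart by a
   congruence modulo 2 or 3.  L^1_r instead has two independent homomorphisms to Z
   that do not vanish on H, and applying an isomorphism L^1_r -> L^1_s to
   alpha beta = gamma^r beta alpha shows that r and s divide each other. *)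

From Stdlib Require Import ZArith Reals Lia Lra Classical.

Open Scope Z_scope.

(** * The Heisenberg group and its homomorphisms *)

Definition tri (n : Z) : Z := n * (n - 1) / 2.

Lemma tri_spec n : 2 * tri n = n * (n - 1).
Proof.
  unfold tri. destruct (Z.Even_or_Odd n) as [[m ->]|[m ->]].
  - replace (2 * m * (2 * m - 1)) with (m * (2 * m - 1) * 2) by ring.
    rewrite Z_div_mult by lia. ring.
  - replace ((2 * m + 1) * (2 * m + 1 - 1)) with ((2 * m + 1) * m * 2) by ring.
    rewrite Z_div_mult by lia. ring.
Qed.

Lemma tri_add m n : tri (m + n) = tri m + tri n + m * n.
Proof.
  apply (Z.mul_reg_l _ _ 2); [lia|].
  rewrite !Z.mul_add_distr_l, !tri_spec. ring.
Qed.

Lemma tri_0 : tri 0 = 0. Proof. reflexivity. Qed.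
Lemma tri_1 : tri 1 = 0. Proof. reflexivity. Qed.
Lemma tri_m1 : tri (-1) = 1. Proof. reflexivity. Qed.

Lemma hpow_triple r a b c n : hpow r (a, b, c) n = (n * a, n * b, n * c - r * a * b * tri n).
Proof. reflexivity. Qed.

Lemma hmul_triple r a b c a' b' c' :
  hmul r (a, b, c) (a', b', c') = (a + a', b + b', c + c' - r * a' * b).
Proof. reflexivity. Qed.

Lemma triple_eq (a b c a' b' c' : Z) : a = a' -> b = b' -> c = c' -> (a, b, c) = (a', b', c').
Proof. intros -> -> ->. reflexivity. Qed.

Lemma triple_eta (x : H) : x = (hx x, hy x, hz x).
Proof. destruct x as [[a b] c]. reflexivity. Qed.

Ltac hsimpl := repeat rewrite ?hpow_triple, ?hmul_triple.
Ltac destruct_triple x :=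
  let a := fresh "a" in let b := fresh "b" in let c := fresh "c" in destruct x as [[a b] c].

Definition hinv (r : Z) (x : H) : H := hpow r x (-1).

Lemma hmul_assoc r x y z : hmul r (hmul r x y) z = hmul r x (hmul r y z).
Proof. destruct_triple x; destruct_triple y; destruct_triple z. hsimpl. apply triple_eq; ring. Qed.

Lemma hmul_1l r x : hmul r hone x = x.
Proof. destruct_triple x. unfold hone. hsimpl. apply triple_eq; ring. Qed.

Lemma hmul_1r r x : hmul r x hone = x.
Proof. destruct_triple x. unfold hone. hsimpl. apply triple_eq; ring. Qed.

Lemma hmul_inv_r r x : hmul r x (hinv r x) = hone.
Proof. destruct_triple x. unfold hinv, hone. hsimpl. rewrite tri_m1. apply triple_eq; ring. Qed.

Lemma hmul_inv_l r x : hmul r (hinv r x) x = hone.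
Proof. destruct_triple x. unfold hinv, hone. hsimpl. rewrite tri_m1. apply triple_eq; ring. Qed.

Lemma hpow_add r x m n : hpow r x (m + n) = hmul r (hpow r x m) (hpow r x n).
Proof. destruct_triple x. hsimpl. rewrite tri_add. apply triple_eq; ring. Qed.

Lemma hpow_0 r x : hpow r x 0 = hone.
Proof. destruct_triple x. unfold hone. hsimpl. rewrite tri_0. apply triple_eq; ring. Qed.

Lemma hpow_1 r x : hpow r x 1 = x.
Proof. destruct_triple x. hsimpl. rewrite tri_1. apply triple_eq; ring. Qed.

Lemma hmul_cancel_r r x y z : hmul r x z = hmul r y z -> x = y.
Proof.
  intro E. rewrite <- (hmul_1r r x), <- (hmul_1r r y), <- (hmul_inv_r r z), <- !hmul_assoc, E.
  reflexivity.
Qed.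

Lemma ga_central r x : hmul r ga x = hmul r x ga.
Proof. destruct_triple x. unfold ga. hsimpl. apply triple_eq; ring. Qed.

Lemma central_triple s z : 0 < s -> (forall y, hmul s z y = hmul s y z) -> z = (0, 0, hz z).
Proof.
  intros Hs C. pose proof (f_equal hz (C al)) as F1. pose proof (f_equal hz (C be)) as F2.
  destruct_triple z. unfold al, be in *. rewrite !hmul_triple in F1, F2. cbn [hz] in *.
  assert (Xa : s * a = 0) by lia. assert (Xb : s * b = 0) by lia.
  apply Z.mul_eq_0 in Xa. apply Z.mul_eq_0 in Xb.
  assert (a = 0) by lia. assert (b = 0) by lia. subst. reflexivity.
Qed.

Lemma heis_relation r : hmul r al be = hmul r (hpow r ga r) (hmul r be al).
Proof. unfold al, be, ga. hsimpl. apply triple_eq; ring. Qed.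

Lemma triple_decomp r a b c :
  (a, b, c) = hmul r (hmul r (hpow r al a) (hpow r be b)) (hpow r ga c).
Proof. unfold al, be, ga. hsimpl. apply triple_eq; ring. Qed.

Definition hhom (r s : Z) (f : H -> H) : Prop := forall x y, f (hmul r x y) = hmul s (f x) (f y).

Lemma hhom_one r s f : hhom r s f -> f hone = hone.
Proof.
  intro Hf. apply (hmul_cancel_r s _ _ (f hone)). rewrite <- Hf, !hmul_1l. reflexivity.
Qed.

Lemma hhom_pow r s f x n : hhom r s f -> f (hpow r x n) = hpow s (f x) n.
Proof.
  intro Hf. induction n using Z.peano_ind.
  - rewrite !hpow_0. exact (hhom_one r s f Hf).
  - rewrite <- Z.add_1_r, !hpow_add, Hf, IHn, !hpow_1. reflexivity.
  - apply (hmul_cancel_r s _ _ (f x)).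
    rewrite <- (hpow_1 r x) at 2. rewrite <- Hf, <- hpow_add.
    rewrite <- (hpow_1 s (f x)) at 2. rewrite <- hpow_add.
    replace (Z.pred n + 1) with n by lia. exact IHn.
Qed.

Lemma hhom_triple r s f a b c : hhom r s f ->
  f (a, b, c) = hmul s (hmul s (hpow s (f al) a) (hpow s (f be) b)) (hpow s (f ga) c).
Proof.
  intro Hf. rewrite (triple_decomp r a b c) at 1. rewrite !Hf, !(hhom_pow r s); auto.
Qed.

Lemma hhom_ext r s f g : hhom r s f -> hhom r s g ->
  f al = g al -> f be = g be -> f ga = g ga -> forall x, f x = g x.
Proof.
  intros Hf Hg E1 E2 E3 x. destruct_triple x.
  rewrite (hhom_triple r s f), (hhom_triple r s g), E1, E2, E3; auto.
Qed.

Definition mat2 : Type := (Z * Z * Z * Z)%type.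

Definition mat2_mul (x y : mat2) : mat2 :=
  let '(a, b, c, d) := x in let '(a', b', c', d') := y in
  (a * a' + b * c', a * b' + b * d', c * a' + d * c', c * b' + d * d').
Definition mat2_adj (x : mat2) : mat2 := let '(a, b, c, d) := x in (d, - b, - c, a).
Definition mat2_det (x : mat2) : Z := let '(a, b, c, d) := x in a * d - b * c.
Lemma hhom_linear r s f a b c e : hhom r s f -> f ga = (0, 0, e) ->
  hx (f (a, b, c)) = a * hx (f al) + b * hx (f be) /\
  hy (f (a, b, c)) = a * hy (f al) + b * hy (f be).
Proof.
  intros Hf Hg. rewrite (hhom_triple r s f a b c Hf), Hg.
  destruct (f al) as [[x1 x2] x3], (f be) as [[y1 y2] y3]. hsimpl. cbn. split; ring.
Qed.

Definition lin (f : H -> H) : mat2 := (sbar11 f, sbar12 f, sbar21 f, sbar22 f).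

Lemma lin_comp r s f g e : hhom r s f -> f ga = (0, 0, e) ->
  lin (fun x => f (g x)) = mat2_mul (lin f) (lin g).
Proof.
  intros Hf Hg. unfold lin, sbar11, sbar12, sbar21, sbar22.
  rewrite (triple_eta (g al)), (triple_eta (g be)).
  destruct (hhom_linear r s f (hx (g al)) (hy (g al)) (hz (g al)) e Hf Hg) as [-> ->].
  destruct (hhom_linear r s f (hx (g be)) (hy (g be)) (hz (g be)) e Hf Hg) as [-> ->].
  cbn [mat2_mul hx hy]. f_equal; [f_equal; [f_equal|]|]; ring.
Qed.

(* Apply A to the defining relation alpha beta = gamma^r beta alpha. *)
Lemma hhom_det r s A c : hhom r s A -> A ga = (0, 0, c) -> s * mat2_det (lin A) = r * c.
Proof.
  intros HA Hg. pose proof (f_equal A (heis_relation r)) as E.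
  rewrite !HA, (hhom_pow r s A ga r HA), Hg in E.
  unfold lin, sbar11, sbar12, sbar21, sbar22. cbn [mat2_det].
  destruct (A al) as [[x1 x2] x3]. destruct (A be) as [[y1 y2] y3].
  rewrite !hpow_triple, !hmul_triple in E. cbn [hx hy].
  pose proof (f_equal hz E) as F. cbn [hz] in F. lia.
Qed.

Definition hdet (u v : H) : Z := hx u * hy v - hy u * hx v.

Lemma phi_triple r u1 u2 u3 v1 v2 v3 a b c :
  phi r (u1, u2, u3) (v1, v2, v3) (a, b, c) =
  (a * u1 + b * v1, a * u2 + b * v2,
   a * u3 - r * u1 * u2 * tri a + (b * v3 - r * v1 * v2 * tri b) - r * (b * v1) * (a * u2) + c).
Proof. unfold phi. hsimpl. apply triple_eq; ring. Qed.

Lemma phi_al r u v : phi r u v al = u.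
Proof.
  destruct_triple u; destruct_triple v. unfold al. rewrite phi_triple, tri_0, tri_1.
  apply triple_eq; ring.
Qed.

Lemma phi_be r u v : phi r u v be = v.
Proof.
  destruct_triple u; destruct_triple v. unfold be. rewrite phi_triple, tri_0, tri_1.
  apply triple_eq; ring.
Qed.

Lemma phi_ga r u v : phi r u v ga = ga.
Proof.
  destruct_triple u; destruct_triple v. unfold ga. rewrite phi_triple, tri_0.
  apply triple_eq; ring.
Qed.

Lemma phi_hom r u v : hdet u v = 1 -> hhom r r (phi r u v).
Proof.
  destruct u as [[u1 u2] u3], v as [[v1 v2] v3]. unfold hdet. cbn [hx hy]. intros Hd x y.
  destruct x as [[a b] c], y as [[a' b'] c']. hsimpl. rewrite !phi_triple. hsimpl. rewrite !tri_add.
  apply triple_eq; try ring.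
  rewrite <- (Z.mul_1_r (r * a' * b)), <- Hd. ring.
Qed.

Lemma phi_inj r u v x y : hdet u v = 1 -> phi r u v x = phi r u v y -> x = y.
Proof.
  destruct u as [[u1 u2] u3], v as [[v1 v2] v3], x as [[x1 x2] x3], y as [[y1 y2] y3].
  unfold hdet. cbn [hx hy]. intros Hd E. rewrite !phi_triple in E. injection E as E1 E2 E3.
  assert (x1 = y1).
  { assert (x1 - y1 = v2 * ((x1 * u1 + x2 * v1) - (y1 * u1 + y2 * v1))
                      - v1 * ((x1 * u2 + x2 * v2) - (y1 * u2 + y2 * v2))) as D1
      by (transitivity ((x1 - y1) * (u1 * v2 - u2 * v1)); [rewrite Hd|]; ring).
    rewrite E1, E2 in D1. lia. }
  assert (x2 = y2).
  { assert (x2 - y2 = u1 * ((x1 * u2 + x2 * v2) - (y1 * u2 + y2 * v2))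
                      - u2 * ((x1 * u1 + x2 * v1) - (y1 * u1 + y2 * v1))) as D2
      by (transitivity ((x2 - y2) * (u1 * v2 - u2 * v1)); [rewrite Hd|]; ring).
    rewrite E1, E2 in D2. lia. }
  subst. f_equal. lia.
Qed.

Lemma phi_inv_u r u v : hdet u v = 1 -> phi r u v (inv_u r u v) = al.
Proof.
  unfold hdet, inv_u, al. destruct_triple u; destruct_triple v. cbn [hx hy hz]. intro Hd.
  rewrite !phi_triple. cbn [hx hy hz]. apply triple_eq; try lia; ring.
Qed.

Lemma phi_inv_v r u v : hdet u v = 1 -> phi r u v (inv_v r u v) = be.
Proof.
  unfold hdet, inv_v, be. destruct_triple u; destruct_triple v. cbn [hx hy hz]. intro Hd.
  rewrite !phi_triple. cbn [hx hy hz]. apply triple_eq; try lia; ring.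
Qed.

Lemma hdet_inv r u v : hdet u v = 1 -> hdet (inv_u r u v) (inv_v r u v) = 1.
Proof. unfold hdet, inv_u, inv_v. cbn [hx hy]. lia. Qed.

Lemma phi_haut r u v : hdet u v = 1 -> haut r (phi r u v) (phi r (inv_u r u v) (inv_v r u v)).
Proof.
  intro Hd. pose proof (phi_hom r u v Hd) as HS.
  pose proof (phi_hom r _ _ (hdet_inv r u v Hd)) as HT.
  assert (ST : forall x, phi r u v (phi r (inv_u r u v) (inv_v r u v) x) = x).
  { apply (hhom_ext r r _ (fun x => x)).
    - intros x y. rewrite HT, HS. reflexivity.
    - intros x y. reflexivity.
    - rewrite phi_al. apply phi_inv_u, Hd.
    - rewrite phi_be. apply phi_inv_v, Hd.
    - rewrite !phi_ga. reflexivity. }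
  split; [exact HS|split; [|exact ST]].
  intro x. apply (phi_inj r u v _ _ Hd). rewrite ST. reflexivity.
Qed.

Lemma haut_hom r S T : haut r S T -> hhom r r S.
Proof. intros [HS _]. exact HS. Qed.

Lemma haut_sym r S T : haut r S T -> haut r T S.
Proof.
  intros [HS [HTS HST]]. split; [|split; assumption].
  intros x y. rewrite <- (HST x), <- (HST y) at 1. rewrite <- HS, HTS. reflexivity.
Qed.

Lemma iterZ_succ S T n h : (forall x, S (T x) = x) ->
  iterZ S T (Z.succ n) h = S (iterZ S T n h).
Proof.
  intro HST. destruct n as [|p|p].
  - reflexivity.
  - cbn. rewrite Pos.add_1_r, Pos.iter_succ. reflexivity.
  - destruct (Pos.succ_pred_or p) as [->| <-].
    + cbn. rewrite HST. reflexivity.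
    + replace (Z.succ (Z.neg (Pos.succ (Pos.pred p)))) with (Z.neg (Pos.pred p)) by lia.
      cbn. rewrite Pos.iter_succ, HST. reflexivity.
Qed.

Lemma iterZ_pred S T n h : (forall x, T (S x) = x) ->
  iterZ S T (Z.pred n) h = T (iterZ S T n h).
Proof.
  intro HTS. destruct n as [|p|p].
  - reflexivity.
  - destruct (Pos.succ_pred_or p) as [->| <-].
    + cbn. rewrite HTS. reflexivity.
    + replace (Z.pred (Z.pos (Pos.succ (Pos.pred p)))) with (Z.pos (Pos.pred p)) by lia.
      cbn. rewrite Pos.iter_succ, HTS. reflexivity.
  - replace (Z.pred (Z.neg p)) with (Z.neg (Pos.succ p)) by lia.
    cbn. rewrite Pos.iter_succ. reflexivity.
Qed.

Lemma iterZ_add r S T m n h : haut r S T ->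
  iterZ S T (m + n) h = iterZ S T m (iterZ S T n h).
Proof.
  intros [_ [HTS HST]]. revert h. induction m using Z.peano_ind; intro h.
  - reflexivity.
  - rewrite Z.add_succ_l, !iterZ_succ, IHm; auto.
  - rewrite Z.add_pred_l, !iterZ_pred, IHm; auto.
Qed.

Lemma iterZ_hom r S T n : haut r S T -> hhom r r (iterZ S T n).
Proof.
  intro Ha. pose proof (haut_hom _ _ _ Ha) as HS.
  pose proof (haut_hom _ _ _ (haut_sym _ _ _ Ha)) as HT. destruct Ha as [_ [HTS HST]].
  induction n using Z.peano_ind; intros x y.
  - reflexivity.
  - rewrite !iterZ_succ, IHn, HS; auto.
  - rewrite !iterZ_pred, IHn, HT; auto.
Qed.

Lemma iterZ_opp S T n h : iterZ T S (- n) h = iterZ S T n h.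
Proof. destruct n; reflexivity. Qed.

Lemma iterZ_fixed S T n h : (forall x, S x = x) -> (forall x, T x = x) -> iterZ S T n h = h.
Proof.
  intros HS HT. destruct n as [|p|p]; cbn; [reflexivity| |];
    apply Pos.iter_invariant; auto; congruence.
Qed.

(** * Groups and semidirect products *)

Definition is_group {X} (m : X -> X -> X) (e : X) (i : X -> X) : Prop :=
  (forall x y z, m (m x y) z = m x (m y z)) /\ (forall x, m e x = x) /\ (forall x, m x e = x) /\
  (forall x, m x (i x) = e) /\ (forall x, m (i x) x = e).

Definition gpow {X} (m : X -> X -> X) (e : X) (i : X -> X) (x : X) (n : Z) : X :=
  match n with
  | Z0 => e
  | Zpos p => Pos.iter (fun y => m y x) e p
  | Zneg p => Pos.iter (fun y => m y (i x)) e p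
  end.

Section AbstractGroup.

Context {X : Type} (m : X -> X -> X) (e : X) (i : X -> X).
Hypothesis Hgrp : is_group m e i.

Lemma group_cancel_r x y z : m x z = m y z -> x = y.
Proof.
  destruct Hgrp as [A [_ [R [I1 _]]]]. intro E.
  rewrite <- (R x), <- (R y), <- (I1 z), <- !A, E. reflexivity.
Qed.

Lemma group_cancel_l x y z : m z x = m z y -> x = y.
Proof.
  destruct Hgrp as [A [L [_ [_ I2]]]]. intro E.
  rewrite <- (L x), <- (L y), <- (I2 z), !A, E. reflexivity.
Qed.

Lemma gpow_succ x n : gpow m e i x (Z.succ n) = m (gpow m e i x n) x.
Proof.
  destruct Hgrp as [A [L [R [_ I2]]]]. destruct n as [|p|p].
  - cbn. rewrite L. reflexivity.
  - cbn. rewrite Pos.add_1_r, Pos.iter_succ. reflexivity.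
  - destruct (Pos.succ_pred_or p) as [->| <-].
    + cbn. rewrite L, I2. reflexivity.
    + replace (Z.succ (Z.neg (Pos.succ (Pos.pred p)))) with (Z.neg (Pos.pred p)) by lia.
      cbn. rewrite Pos.iter_succ, A, I2, R. reflexivity.
Qed.

Lemma gpow_pred x n : gpow m e i x (Z.pred n) = m (gpow m e i x n) (i x).
Proof.
  destruct Hgrp as [A [L [R [I1 _]]]]. destruct n as [|p|p].
  - cbn. rewrite L. reflexivity.
  - destruct (Pos.succ_pred_or p) as [->| <-].
    + cbn. rewrite L, I1. reflexivity.
    + replace (Z.pred (Z.pos (Pos.succ (Pos.pred p)))) with (Z.pos (Pos.pred p)) by lia.
      cbn. rewrite Pos.iter_succ, A, I1, R. reflexivity.
  - replace (Z.pred (Z.neg p)) with (Z.neg (Pos.succ p)) by lia.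
    cbn. rewrite Pos.iter_succ. reflexivity.
Qed.

Lemma gpow_add x a b : gpow m e i x (a + b) = m (gpow m e i x a) (gpow m e i x b).
Proof.
  pose proof Hgrp as [A [_ [R _]]]. induction b using Z.peano_ind.
  - rewrite Z.add_0_r. cbn. rewrite R. reflexivity.
  - rewrite Z.add_succ_r, !gpow_succ, IHb, A. reflexivity.
  - rewrite Z.add_pred_r, !gpow_pred, IHb, A. reflexivity.
Qed.

End AbstractGroup.

Section GroupHom.

Context {X Y : Type} (m : X -> X -> X) (e : X) (i : X -> X).
Context (m' : Y -> Y -> Y) (e' : Y) (i' : Y -> Y).
Hypotheses (Hgrp : is_group m e i) (Hgrp' : is_group m' e' i').
Variable f : X -> Y.
Hypothesis Hf : forall x y, f (m x y) = m' (f x) (f y).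

Lemma group_hom_unit : f e = e'.
Proof.
  apply (group_cancel_r m' e' i' Hgrp' _ _ (f e)). rewrite <- Hf.
  destruct Hgrp as [_ [L _]]. destruct Hgrp' as [_ [L' _]]. rewrite L, L'. reflexivity.
Qed.

Lemma group_hom_inv x : f (i x) = i' (f x).
Proof.
  apply (group_cancel_l m' e' i' Hgrp' _ _ (f x)). rewrite <- Hf.
  destruct Hgrp as [_ [_ [_ [I1 _]]]]. destruct Hgrp' as [_ [_ [_ [I1' _]]]].
  rewrite I1, I1'. exact group_hom_unit.
Qed.

Lemma group_hom_pow x n : f (gpow m e i x n) = gpow m' e' i' (f x) n.
Proof.
  induction n using Z.peano_ind.
  - exact group_hom_unit.
  - rewrite !gpow_succ, Hf, IHn; auto.
  - rewrite !gpow_pred, Hf, IHn, group_hom_inv; auto.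
Qed.

End GroupHom.

Definition sd_one : G := (hone, 0).
Definition sd_inv (r : Z) (S T : H -> H) (x : G) : G :=
  let '(h, n) := x in (iterZ S T (- n) (hinv r h), - n).

Lemma sd_group r S T : haut r S T -> is_group (sdmul r S T) sd_one (sd_inv r S T).
Proof.
  intro Ha. pose proof (fun n => iterZ_hom r S T n Ha) as Hh.
  repeat split.
  - intros [h1 n1] [h2 n2] [h3 n3]. cbn [sdmul]. f_equal; [|ring].
    rewrite Hh, hmul_assoc, (iterZ_add r S T); auto.
  - intros [h n]. cbn [sdmul sd_one iterZ]. rewrite hmul_1l. reflexivity.
  - intros [h n]. cbn [sdmul sd_one]. rewrite (hhom_one r r _ (Hh n)), hmul_1r, Z.add_0_r. reflexivity.
  - intros [h n]. cbn [sdmul sd_inv]. rewrite <- (iterZ_add r S T); auto.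
    replace (n + - n) with 0 by ring. rewrite hmul_inv_r. reflexivity.
  - intros [h n]. cbn [sdmul sd_inv]. rewrite <- (Hh (- n)), hmul_inv_l, (hhom_one _ _ _ (Hh (- n))).
    unfold sd_one. f_equal. ring.
Qed.

Lemma Z_group : is_group Z.add 0 Z.opp.
Proof. repeat split; intros; ring. Qed.

Lemma gpow_Z x n : gpow Z.add 0 Z.opp x n = n * x.
Proof.
  induction n using Z.peano_ind.
  - reflexivity.
  - rewrite gpow_succ, IHn by exact Z_group. unfold Z.succ. ring.
  - rewrite gpow_pred, IHn by exact Z_group. unfold Z.pred. ring.
Qed.

Definition is_character {X} (m : X -> X -> X) (chi : X -> Z) : Prop :=
  forall x y, chi (m x y) = chi x + chi y.

Lemma character_gpow {X} (m : X -> X -> X) e i (chi : X -> Z) x n : is_group m e i ->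
  is_character m chi -> chi (gpow m e i x n) = n * chi x.
Proof.
  intros Hg Hchi. rewrite (group_hom_pow m e i Z.add 0 Z.opp Hg Z_group chi Hchi). apply gpow_Z.
Qed.

Lemma sd_snd_gpow r S T x n : haut r S T ->
  snd (gpow (sdmul r S T) sd_one (sd_inv r S T) x n) = n * snd x.
Proof.
  intro Ha. apply (character_gpow _ _ _ _ x n (sd_group r S T Ha)).
  intros [h k] [h' k']. reflexivity.
Qed.

Lemma iso_refl m : iso m m.
Proof. exists (fun x => x). split; [reflexivity|]. exists (fun x => x). split; reflexivity. Qed.

Lemma iso_sym m1 m2 : iso m1 m2 -> iso m2 m1.
Proof.
  intros [f [Hf [g [Hgf Hfg]]]]. exists g. split.
  - intros x y. rewrite <- (Hfg x), <- (Hfg y), <- Hf, !Hgf. reflexivity.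
  - exists f. split; assumption.
Qed.

Lemma iso_trans m1 m2 m3 : iso m1 m2 -> iso m2 m3 -> iso m1 m3.
Proof.
  intros [f [Hf [g [Hgf Hfg]]]] [f' [Hf' [g' [Hgf' Hfg']]]]. exists (fun x => f' (f x)). split.
  - intros x y. rewrite Hf, Hf'. reflexivity.
  - exists (fun y => g (g' y)). split; intro; [rewrite Hgf', Hgf | rewrite Hfg, Hfg']; reflexivity.
Qed.

Lemma iso_ext m1 m1' m2 m2' : (forall x y, m1 x y = m1' x y) -> (forall x y, m2 x y = m2' x y) ->
  iso m1 m2 -> iso m1' m2'.
Proof.
  intros E1 E2 [f [Hf Hg]]. exists f. split; [|exact Hg].
  intros x y. rewrite <- E1, <- E2. apply Hf.
Qed.

Lemma sd_iso_swap r S T : iso (sdmul r S T) (sdmul r T S).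
Proof.
  exists (fun x => let '(h, n) := x in (h, - n)). split.
  - intros [h n] [h' n']. cbn [sdmul]. rewrite iterZ_opp. f_equal. ring.
  - exists (fun x => let '(h, n) := x in (h, - n)). split; intros [h n]; f_equal; ring.
Qed.

Section SemidirectConjugation.

Variables (r s : Z) (S T S' T' A B : H -> H) (h0 : H).
Hypotheses (Ha : haut r S T) (Ha' : haut s S' T') (HA : hhom r s A).
Hypotheses (HBA : forall x, B (A x) = x) (HAB : forall y, A (B y) = y).
Hypothesis Hconj : forall h, hmul s h0 (S' (A h)) = hmul s (A (S h)) h0.

Let m' := sdmul s S' T'.
Let i' := sd_inv s S' T'.
Let g : G := (h0, 1).
Let gp := gpow m' sd_one i' g.

(* The element h0 delta of the target plays the role of delta. *)
Lemma conj_gpow n h : m' (A (iterZ S T n h), 0) (gp n) = m' (gp n) (A h, 0).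
Proof.
  pose proof (sd_group _ _ _ Ha') as Gp. pose proof Gp as [As [Ls [Rs [I1s I2s]]]].
  pose proof Ha as [_ [HTS HST]].
  assert (B0 : forall h, m' (A (S h), 0) g = m' g (A h, 0)).
  { intro h'. unfold m', g. cbn [sdmul iterZ]. rewrite <- Hconj. reflexivity. }
  assert (B1 : forall h, m' (A (T h), 0) (i' g) = m' (i' g) (A h, 0)).
  { intro h'. pose proof (B0 (T h')) as E. rewrite HST in E.
    apply (group_cancel_r m' sd_one i' Gp _ _ g). rewrite As, I2s, Rs.
    apply (group_cancel_l m' sd_one i' Gp _ _ g). rewrite <- !As, I1s, Ls. symmetry. exact E. }
  revert h. induction n using Z.peano_ind; intro h.
  - change (gp 0) with sd_one. change (iterZ S T 0 h) with h. rewrite Ls, Rs. reflexivity.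
  - unfold gp. rewrite gpow_succ by exact Gp. fold gp.
    rewrite <- Z.add_1_r, (iterZ_add r S T n 1 h Ha).
    rewrite <- As, IHn, As, B0, As. reflexivity.
  - unfold gp. rewrite gpow_pred by exact Gp. fold gp.
    replace (Z.pred n) with (n + -1) by lia. rewrite (iterZ_add r S T n (-1) h Ha).
    rewrite <- As, IHn, As, B1, As. reflexivity.
Qed.

Lemma sd_iso_conj : iso (sdmul r S T) (sdmul s S' T').
Proof.
  pose proof (sd_group _ _ _ Ha') as Gp. pose proof Gp as [As _].
  assert (Hsnd : forall n, snd (gp n) = n).
  { intro n. unfold gp, m', i'. rewrite sd_snd_gpow by exact Ha'. apply Z.mul_1_r. }
  assert (Hmul0 : forall x c n, m' (x, 0) (c, n) = (hmul s x c, n)) by reflexivity.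
  exists (fun x => let '(h, n) := x in m' (A h, 0) (gp n)). split.
  - intros [h n] [h' n']. cbn [sdmul].
    unfold gp. rewrite gpow_add by exact Gp. fold gp.
    rewrite HA. change (hmul s (A h) (A (iterZ S T n h')), 0) with (m' (A h, 0) (A (iterZ S T n h'), 0)).
    rewrite !As, <- (As _ (gp n)), conj_gpow, !As. reflexivity.
  - exists (fun y => let '(h', n) := y in (B (hmul s h' (hinv s (fst (gp n)))), n)). split.
    + intros [h n]. specialize (Hsnd n). destruct (gp n) as [c k] eqn:Eg. cbn in Hsnd. subst k.
      rewrite Hmul0, Eg. cbn [fst]. rewrite hmul_assoc, hmul_inv_r, hmul_1r, HBA. reflexivity.
    + intros [h n]. specialize (Hsnd n). destruct (gp n) as [c k] eqn:Eg. cbn in Hsnd. subst k.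
      rewrite Hmul0. cbn [fst]. rewrite HAB, hmul_assoc, hmul_inv_l, hmul_1r. reflexivity.
Qed.

End SemidirectConjugation.

(** * The groups L^i_r *)

Definition lab_u (i : lab) (r : Z) : H :=
  match i with
  | L1 => (1, 0, 0) | L2 => (-1, 0, 0) | L2p => (-1, 0, 1) | L3 => (0, 1, r)
  | L3p => (0, 1, r - 1) | L4 => (0, 1, 0) | L4p => (0, 1, 1) | L6 => (1, 1, 0)
  end.
Definition lab_v (i : lab) (r : Z) : H :=
  match i with
  | L1 => (0, 1, 0) | L2 => (0, -1, 0) | L2p => (0, -1, -1) | L3 => (-1, -1, -r)
  | L3p => (-1, -1, 1 - r) | L4 => (-1, 0, 0) | L4p => (-1, 0, 0) | L6 => (-1, 0, 0)
  end.

Lemma lab_gens_eq i r : lab_gens i r = (lab_u i r, lab_v i r).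
Proof.
  destruct i; unfold lab_gens, al, be, ga; cbn [lab_u lab_v fst snd]; hsimpl;
    rewrite ?tri_0, ?tri_1, ?tri_m1; f_equal; apply triple_eq; ring.
Qed.

Lemma lab_S_eq i r : lab_S i r = phi r (lab_u i r) (lab_v i r).
Proof. unfold lab_S. rewrite lab_gens_eq. reflexivity. Qed.

Lemma lab_T_eq i r :
  lab_T i r = phi r (inv_u r (lab_u i r) (lab_v i r)) (inv_v r (lab_u i r) (lab_v i r)).
Proof. unfold lab_T. rewrite lab_gens_eq. reflexivity. Qed.

Lemma lab_det i r : hdet (lab_u i r) (lab_v i r) = 1.
Proof. destruct i; reflexivity. Qed.

Lemma lab_haut i r : haut r (lab_S i r) (lab_T i r).
Proof. rewrite lab_S_eq, lab_T_eq. apply phi_haut, lab_det. Qed.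

Section Rotations.

Open Scope R_scope.

Lemma rotation_I : conj_to_rotation 1 0 0 1.
Proof. exists 1, 0, 0, 1, 0. rewrite cos_0, sin_0. cbn. repeat split; lra. Qed.

Lemma rotation_S2 : conj_to_rotation (-1) 0 0 (-1).
Proof. exists 1, 0, 0, 1, PI. rewrite cos_PI, sin_PI. cbn. repeat split; lra. Qed.

Lemma rotation_S4 : conj_to_rotation 0 (-1) 1 0.
Proof. exists 1, 0, 0, 1, (PI / 2). rewrite cos_PI2, sin_PI2. cbn. repeat split; lra. Qed.

(* Both S3 and S6 are conjugated to rotations by [[1, -1/2], [0, sqrt 3 / 2]]. *)
Lemma rotation_S3 : conj_to_rotation 0 (-1) 1 (-1).
Proof.
  exists 1, (-1/2), 0, (sqrt 3 / 2), (PI - PI / 3).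
  rewrite Rtrigo_facts.cos_pi_minus, Rtrigo_facts.sin_pi_minus, cos_PI3, sin_PI3.
  pose proof (sqrt_lt_R0 3 ltac:(lra)). pose proof (sqrt_sqrt 3 ltac:(lra)).
  cbn. repeat split; nra.
Qed.

Lemma rotation_S6 : conj_to_rotation 1 (-1) 1 0.
Proof.
  exists 1, (-1/2), 0, (sqrt 3 / 2), (PI / 3). rewrite cos_PI3, sin_PI3.
  pose proof (sqrt_lt_R0 3 ltac:(lra)). pose proof (sqrt_sqrt 3 ltac:(lra)).
  cbn. repeat split; nra.
Qed.

End Rotations.

Lemma lab_osc_data i r : lab_valid i r -> osc_data r (lab_S i r) (lab_T i r).
Proof.
  intros [Hr _]. split; [exact Hr|split; [apply lab_haut|]].
  unfold sbar11, sbar12, sbar21, sbar22. rewrite lab_S_eq, phi_al, phi_be.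
  destruct i; cbn; auto using rotation_I, rotation_S2, rotation_S3, rotation_S4, rotation_S6.
Qed.

(** * Normal forms of the gamma-exponents *)

Lemma inner_hom r h0 : hhom r r (fun x => hmul r (hmul r h0 x) (hinv r h0)).
Proof.
  intros x y. rewrite !hmul_assoc. do 2 f_equal.
  rewrite <- (hmul_assoc r (hinv r h0) h0), hmul_inv_l, hmul_1l. reflexivity.
Qed.

(* Change of basis alpha |-> u, beta |-> v followed by conjugation with h0. *)
Lemma iso_Lgrp_of_gens r S T i u v h0 : haut r S T -> hdet u v = 1 -> S ga = ga ->
  hmul r h0 (lab_S i r u) = hmul r (phi r u v (S al)) h0 ->
  hmul r h0 (lab_S i r v) = hmul r (phi r u v (S be)) h0 ->
  iso (sdmul r S T) (Lgrp i r).
Proof.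
  intros Ha Hd Hg E1 E2.
  pose proof (phi_haut r u v Hd) as [HA [HBA HAB]].
  assert (K : forall h, hmul r (hmul r h0 (lab_S i r (phi r u v h))) (hinv r h0) = phi r u v (S h)).
  { apply (hhom_ext r r).
    - intros x y. rewrite HA, (haut_hom _ _ _ (lab_haut i r)). apply inner_hom.
    - intros x y. rewrite (haut_hom _ _ _ Ha), HA. reflexivity.
    - rewrite phi_al, E1, hmul_assoc, hmul_inv_r, hmul_1r. reflexivity.
    - rewrite phi_be, E2, hmul_assoc, hmul_inv_r, hmul_1r. reflexivity.
    - rewrite Hg, phi_ga, lab_S_eq, phi_ga, <- ga_central, hmul_assoc, hmul_inv_r, hmul_1r.
      reflexivity. }
  apply (sd_iso_conj r r S T (lab_S i r) (lab_T i r) (phi r u v) _ h0 Ha (lab_haut i r) HA HBA HAB).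
  intro h. rewrite <- K, hmul_assoc, hmul_inv_l, hmul_1r. reflexivity.
Qed.

Ltac eval_tri := repeat
  match goal with |- context [tri ?e] =>
    let v := eval vm_compute in (tri e) in change (tri e) with v
  end.

Ltac hcompute := unfold al, be, ga; repeat rewrite ?phi_triple, ?hmul_triple; eval_tri.

Ltac normal_form Ha Hg E1 E2 u v h0 :=
  match goal with |- iso (sdmul ?r ?S ?T) (Lgrp ?i ?r) =>
    apply (iso_Lgrp_of_gens r S T i u v h0 Ha eq_refl Hg);
    [ rewrite E1, lab_S_eq | rewrite E2, lab_S_eq ]; cbn [lab_u lab_v]; hcompute;
    apply triple_eq; ring
  end.

Lemma mod2_even x : (2 * x) mod 2 = 0.
Proof. rewrite Z.mul_comm. apply Z_mod_mult. Qed.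

Lemma mod2_odd x : (2 * x + 1) mod 2 = 1.
Proof. rewrite Z.add_comm, Z.mul_comm, Z_mod_plus_full. reflexivity. Qed.

Section NormalForms.

Variables (r k l : Z) (S T : H -> H).
Hypotheses (Ha : haut r S T) (Hg : S ga = ga).

Lemma normal_form_S2 : S al = (-1, 0, k) -> S be = (0, -1, l) ->
  ((Z.Odd r \/ (Z.Even k /\ Z.Even l)) -> iso (sdmul r S T) (Lgrp L2 r)) /\
  (~ (Z.Odd r \/ (Z.Even k /\ Z.Even l)) -> iso (sdmul r S T) (Lgrp L2p r)).
Proof.
  intros E1 E2. split; intro Hc.
  - destruct Hc as [[m ->] | [[k1 ->] [l1 ->]]].
    + normal_form Ha Hg E1 E2 (1, 0, - m * k) (0, 1, l * (m + 1)) (l, k, 0).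
    + normal_form Ha Hg E1 E2 (1, 0, k1) (0, 1, l1) (0, 0, 0).
  - destruct (Z.Even_or_Odd r) as [[m ->]|Ho]; [|tauto].
    destruct (Z.Even_or_Odd k) as [[k1 ->]|[k1 ->]], (Z.Even_or_Odd l) as [[l1 ->]|[l1 ->]].
    + exfalso. apply Hc. right. split; eexists; reflexivity.
    + normal_form Ha Hg E1 E2 (1, 1, k1 - m) (0, 1, l1 + 1) (0, 0, 0).
    + normal_form Ha Hg E1 E2 (1, 0, k1) (1, 1, l1 - m) (0, 0, 0).
    + normal_form Ha Hg E1 E2 (1, 0, k1) (0, 1, l1 + 1) (0, 0, 0).
Qed.

Lemma residue3 x : exists a, x = 3 * a \/ x = 3 * a + 1 \/ x = 3 * a + 2.
Proof. exists (x / 3). pose proof (Z_div_mod_eq_full x 3). pose proof (Z.mod_pos_bound x 3). lia. Qed.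

Lemma mod3_eq_iff n tau : k - l = 3 * n + tau -> 0 <= tau < 3 -> (k mod 3 = l mod 3 <-> tau = 0).
Proof.
  intros Hn Htau. pose proof (Z_div_mod_eq_full k 3). pose proof (Z.mod_pos_bound k 3).
  pose proof (Z_div_mod_eq_full l 3). pose proof (Z.mod_pos_bound l 3). lia.
Qed.

(* For 3 not dividing r, the witness uses [t] with [r * r = 3 t + 1]: r is its own
   inverse modulo 3. *)
Lemma normal_form_S3 : S al = (0, 1, k) -> S be = (-1, -1, l) ->
  ((~ (3 | r) \/ k mod 3 = l mod 3) -> iso (sdmul r S T) (Lgrp L3 r)) /\
  (~ (~ (3 | r) \/ k mod 3 = l mod 3) -> iso (sdmul r S T) (Lgrp L3p r)).
Proof.
  intros E1 E2. destruct (residue3 r) as [m [Hr|[Hr|Hr]]]; rewrite Hr in *.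
  - assert (Hdiv : (3 | 3 * m)) by (exists m; ring).
    destruct (residue3 (k - l)) as [n [Hn|[Hn|Hn]]];
      replace k with (l + (k - l)) in E1 by ring; rewrite Hn in E1.
    + assert (Heq : k mod 3 = l mod 3) by (apply (mod3_eq_iff n 0); lia).
      split; intro Hc; [|tauto].
      normal_form Ha Hg E1 E2 (1, 0, l + 3 * n - 3 * m + (2 * m - n)) (0, 1, 2 * m - n) (0, 0, 0).
    + assert (Hneq : k mod 3 <> l mod 3) by (rewrite (mod3_eq_iff n 1); lia).
      split; intro Hc; [tauto|].
      normal_form Ha Hg E1 E2 (1, 0, l + 3 * n + 1 - (3 * m - 1) - (n + 1 - 2 * m))
        (0, 1, - (n + 1 - 2 * m)) (0, 0, 0).
    + assert (Hneq : k mod 3 <> l mod 3) by (rewrite (mod3_eq_iff n 2); lia).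
      split; intro Hc; [tauto|].
      normal_form Ha Hg E1 E2 (-1, 0, l + 3 * n + 2 + (3 * m - 1) + (- n - m)) (0, -1, - n - m) (0, 0, 0).
  - assert (Hndiv : ~ (3 | 3 * m + 1)) by (intros [c Hc]; lia).
    split; intro Hc; [|tauto].
    normal_form Ha Hg E1 E2 (1, 0, k - (3 * m + 1) + (k - l - 2 * (3 * m + 1)) * (3 * m * m + 2 * m))
      (0, 1, (k - l - 2 * (3 * m + 1)) * (3 * m * m + 2 * m))
      (0, - ((k - l - 2 * (3 * m + 1)) * (3 * m + 1)), 0).
  - assert (Hndiv : ~ (3 | 3 * m + 2)) by (intros [c Hc]; lia).
    split; intro Hc; [|tauto].
    normal_form Ha Hg E1 E2 (1, 0, k - (3 * m + 2) + (k - l - 2 * (3 * m + 2)) * (3 * m * m + 4 * m + 1))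
      (0, 1, (k - l - 2 * (3 * m + 2)) * (3 * m * m + 4 * m + 1))
      (0, - ((k - l - 2 * (3 * m + 2)) * (3 * m + 2)), 0).
Qed.

Lemma normal_form_S4 : S al = (0, 1, k) -> S be = (-1, 0, l) ->
  ((Z.Odd r \/ k mod 2 = l mod 2) -> iso (sdmul r S T) (Lgrp L4 r)) /\
  (~ (Z.Odd r \/ k mod 2 = l mod 2) -> iso (sdmul r S T) (Lgrp L4p r)).
Proof.
  intros E1 E2. destruct (Z.Even_or_Odd r) as [[m Hr]|[m Hr]]; rewrite Hr in *.
  - assert (Hev : ~ Z.Odd (2 * m)) by (intros [t Ht]; lia).
    destruct (Z.Even_or_Odd k) as [[k1 ->]|[k1 ->]], (Z.Even_or_Odd l) as [[l1 ->]|[l1 ->]];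
      rewrite ?mod2_even, ?mod2_odd in *; split; intro Hc;
      try (exfalso; destruct Hc as [Hc|Hc]; [tauto|discriminate]);
      try (exfalso; apply Hc; right; reflexivity).
    + normal_form Ha Hg E1 E2 (1, 0, k1 + l1) (0, 1, l1 - k1) (0, 0, 0).
    + normal_form Ha Hg E1 E2 (1, 0, k1 + l1) (0, 1, l1 - k1 + 1) (0, 0, 0).
    + normal_form Ha Hg E1 E2 (1, 0, k1 + l1) (0, 1, l1 - k1) (0, 0, 0).
    + normal_form Ha Hg E1 E2 (1, 0, k1 + l1 + 1) (0, 1, l1 - k1) (0, 0, 0).
  - split; intro Hc; [|exfalso; apply Hc; left; exists m; reflexivity].
    normal_form Ha Hg E1 E2 (1, 0, - m * (k + l)) (0, 1, - k - m * (k + l)) (0, k + l, 0).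
Qed.

Lemma normal_form_S6 : S al = (1, 1, k) -> S be = (-1, 0, l) -> iso (sdmul r S T) (Lgrp L6 r).
Proof. intros E1 E2. normal_form Ha Hg E1 E2 (1, 0, l + k) (0, 1, - k) (0, 0, 0). Qed.

End NormalForms.

(** * Central extensions of Z^3 and the case S = I *)

Definition vec3 : Type := (Z * Z * Z)%type.
Definition mat3 : Type := (vec3 * vec3 * vec3)%type.

Definition bilin (m : mat3) (v w : vec3) : Z :=
  let '((m11, m12, m13), (m21, m22, m23), (m31, m32, m33)) := m in
  let '(v1, v2, v3) := v in let '(w1, w2, w3) := w in
  v1 * (m11 * w1 + m12 * w2 + m13 * w3) + v2 * (m21 * w1 + m22 * w2 + m23 * w3)
  + v3 * (m31 * w1 + m32 * w2 + m33 * w3).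

Definition mat_apply (m : mat3) (v : vec3) : vec3 :=
  let '((m11, m12, m13), (m21, m22, m23), (m31, m32, m33)) := m in
  let '(v1, v2, v3) := v in
  (m11 * v1 + m12 * v2 + m13 * v3, m21 * v1 + m22 * v2 + m23 * v3, m31 * v1 + m32 * v2 + m33 * v3).

Definition det3 (m : mat3) : Z :=
  let '((m11, m12, m13), (m21, m22, m23), (m31, m32, m33)) := m in
  m11 * (m22 * m33 - m23 * m32) - m12 * (m21 * m33 - m23 * m31) + m13 * (m21 * m32 - m22 * m31).

Definition adj3 (m : mat3) : mat3 :=
  let '((m11, m12, m13), (m21, m22, m23), (m31, m32, m33)) := m in
  ((m22 * m33 - m23 * m32, m13 * m32 - m12 * m33, m12 * m23 - m13 * m22),
   (m23 * m31 - m21 * m33, m11 * m33 - m13 * m31, m13 * m21 - m11 * m23),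
   (m21 * m32 - m22 * m31, m12 * m31 - m11 * m32, m11 * m22 - m12 * m21)).

Definition vadd (v w : vec3) : vec3 :=
  let '(v1, v2, v3) := v in let '(w1, w2, w3) := w in (v1 + w1, v2 + w2, v3 + w3).

Definition e1 : vec3 := (1, 0, 0).
Definition e2 : vec3 := (0, 1, 0).
Definition e3 : vec3 := (0, 0, 1).

(* The central extension of Z^3 = {(a, b, n)} by Z with 2-cocycle [bilin b]. *)
Definition cocycle_mul (b : mat3) (x y : G) : G :=
  let '((a, b1, c), n) := x in let '((a', b1', c'), n') := y in
  ((a + a', b1 + b1', c + c' + bilin b (a, b1, n) (a', b1', n')), n + n').

Ltac destruct_mat3 p :=
  destruct p as [[[[? ?] ?] [[? ?] ?]] [[? ?] ?]].

Lemma mat_apply_adj_l p v : det3 p = 1 -> mat_apply (adj3 p) (mat_apply p v) = v.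
Proof.
  intro Hd. destruct v as [[v1 v2] v3].
  transitivity (det3 p * v1, det3 p * v2, det3 p * v3).
  - destruct_mat3 p. cbn. apply triple_eq; ring.
  - rewrite Hd. apply triple_eq; ring.
Qed.

Lemma mat_apply_adj_r p v : det3 p = 1 -> mat_apply p (mat_apply (adj3 p) v) = v.
Proof.
  intro Hd. destruct v as [[v1 v2] v3].
  transitivity (det3 p * v1, det3 p * v2, det3 p * v3).
  - destruct_mat3 p. cbn. apply triple_eq; ring.
  - rewrite Hd. apply triple_eq; ring.
Qed.

Section CocycleChange.

Variables (b b' p : mat3).

Definition defect (v w : vec3) : Z := bilin b' (mat_apply p v) (mat_apply p w) - bilin b v w.

(* When the defect is symmetric, [defect_quad] is an integral quadratic refinement of it
   ([defect_polar]), and (v, c) |-> (p v, c + defect_quad v) is an isomorphism. *)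
Definition defect_quad (v : vec3) : Z :=
  let '(v1, v2, v3) := v in
  defect e1 e1 * tri v1 + defect e2 e2 * tri v2 + defect e3 e3 * tri v3 +
  defect e1 e2 * (v1 * v2) + defect e1 e3 * (v1 * v3) + defect e2 e3 * (v2 * v3).

Lemma defect_expand v1 v2 v3 w1 w2 w3 : defect (v1, v2, v3) (w1, w2, w3) =
  defect e1 e1 * v1 * w1 + defect e1 e2 * v1 * w2 + defect e1 e3 * v1 * w3 +
  defect e2 e1 * v2 * w1 + defect e2 e2 * v2 * w2 + defect e2 e3 * v2 * w3 +
  defect e3 e1 * v3 * w1 + defect e3 e2 * v3 * w2 + defect e3 e3 * v3 * w3.
Proof.
  unfold defect. destruct_mat3 b. destruct_mat3 b'. destruct_mat3 p.
  unfold bilin, mat_apply, e1, e2, e3. ring.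
Qed.

Hypotheses (Hdet : det3 p = 1)
  (H12 : defect e1 e2 = defect e2 e1) (H13 : defect e1 e3 = defect e3 e1)
  (H23 : defect e2 e3 = defect e3 e2).

Lemma defect_polar v w : defect v w = defect_quad (vadd v w) - defect_quad v - defect_quad w.
Proof.
  destruct v as [[v1 v2] v3], w as [[w1 w2] w3]. rewrite defect_expand, <- H12, <- H13, <- H23.
  cbn [defect_quad vadd]. rewrite !tri_add. ring.
Qed.

Lemma mat_apply_add v w : mat_apply p (vadd v w) = vadd (mat_apply p v) (mat_apply p w).
Proof. destruct_mat3 p. destruct v as [[v1 v2] v3], w as [[w1 w2] w3]. cbn. apply triple_eq; ring. Qed.

Lemma cocycle_iso : iso (cocycle_mul b) (cocycle_mul b').
Proof.
  exists (fun x => let '((a, b1, c), n) := x in let '(x1, x2, x3) := mat_apply p (a, b1, n) in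
                   ((x1, x2, c + defect_quad (a, b1, n)), x3)). split.
  - intros [[[a1 b1] c1] n1] [[[a2 b2] c2] n2].
    pose proof (defect_polar (a1, b1, n1) (a2, b2, n2)) as K. unfold defect in K.
    cbn [cocycle_mul vadd] in *.
    change (a1 + a2, b1 + b2, n1 + n2) with (vadd (a1, b1, n1) (a2, b2, n2)). rewrite mat_apply_add.
    destruct (mat_apply p (a1, b1, n1)) as [[x1 x2] x3], (mat_apply p (a2, b2, n2)) as [[y1 y2] y3].
    cbn [vadd cocycle_mul]. f_equal. apply triple_eq; try ring. lia.
  - exists (fun y => let '((a, b1, c), n) := y in let '(y1, y2, y3) := mat_apply (adj3 p) (a, b1, n) in
                   ((y1, y2, c - defect_quad (y1, y2, y3)), y3)). split.
    + intros [[[a b1] c] n]. pose proof (mat_apply_adj_l p (a, b1, n) Hdet) as E.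
      destruct (mat_apply p (a, b1, n)) as [[x1 x2] x3]. rewrite E.
      apply (f_equal2 pair); [apply triple_eq; ring | reflexivity].
    + intros [[[a b1] c] n]. pose proof (mat_apply_adj_r p (a, b1, n) Hdet) as E.
      destruct (mat_apply (adj3 p) (a, b1, n)) as [[x1 x2] x3]. rewrite E.
      apply (f_equal2 pair); [apply triple_eq; ring | reflexivity].
Qed.

End CocycleChange.

(* The cocycles of H_1^r(Z) x Z delta and of the semidirect product in which delta acts by
   alpha |-> alpha gamma^k, beta |-> beta gamma^l. *)
Definition heis_form (r : Z) : mat3 := ((0, 0, 0), (-r, 0, 0), (0, 0, 0)).
Definition twisted_form (r k l : Z) : mat3 := ((0, 0, 0), (-r, 0, 0), (k, l, 0)).

Lemma twisted_form_iso r k l : 0 < r ->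
  iso (cocycle_mul (twisted_form r k l)) (cocycle_mul (heis_form (Z.gcd (Z.gcd r k) l))).
Proof.
  intro Hr. rewrite <- Z.gcd_assoc.
  destruct (Z.eq_dec (Z.gcd k l) 0) as [Hz|Hz].
  { apply Z.gcd_eq_0 in Hz as [-> ->]. rewrite Z.gcd_0_r, Z.abs_eq by lia. apply iso_refl. }
  set (g := Z.gcd k l) in *.
  destruct (Z.gcd_divide_l k l) as [k' Hk], (Z.gcd_divide_r k l) as [l' Hl]. fold g in Hk, Hl.
  destruct (Z.gcd_bezout k l g eq_refl) as [x [y Hxy]].
  assert (Hb : k' * x + l' * y = 1) by (apply (Z.mul_reg_l _ _ g Hz); rewrite Hk, Hl in Hxy; lia).
  set (r0 := Z.gcd r g).
  assert (Hr0 : 0 < r0).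
  { pose proof (Z.gcd_nonneg r g). enough (r0 <> 0) by lia.
    intro E. apply Z.gcd_eq_0 in E. lia. }
  destruct (Z.gcd_divide_l r g) as [r' Hr'], (Z.gcd_divide_r r g) as [g' Hg']. fold r0 in Hr', Hg'.
  destruct (Z.gcd_bezout r g r0 eq_refl) as [s [t Hst]].
  assert (Hb2 : s * r' + t * g' = 1) by (apply (Z.mul_reg_l _ _ r0); [lia|]; rewrite Hr', Hg' in Hst; lia).
  clearbody r0 g. subst k l r g.
  (* Bezout completes the primitive vectors (k', l') and (r', g') to the unimodular change of
     coordinates (a, b, n) |-> (k'a + l'b, -r'y a + r'x b - g'n, -ty a + tx b + s n). *)
  apply (cocycle_iso _ _ ((k', l', 0), (- (r' * y), r' * x, - g'), (- (t * y), t * x, s))).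
  - cbn [det3]. transitivity ((t * g' + s * r') * (k' * x + l' * y)); [ring|]. rewrite Hb. lia.
  - unfold defect, bilin, mat_apply, e1, e2, e3, heis_form, twisted_form.
    match goal with |- ?L = ?R => assert (E : L - R = r0 * r' * (k' * x + l' * y - 1)) by ring end.
    rewrite Hb in E. lia.
  - unfold defect, bilin, mat_apply, e1, e2, e3, heis_form, twisted_form. ring.
  - unfold defect, bilin, mat_apply, e1, e2, e3, heis_form, twisted_form. ring.
Qed.

Lemma lab_S_L1 r x : lab_S L1 r x = x.
Proof.
  rewrite lab_S_eq. destruct_triple x. cbn [lab_u lab_v]. rewrite phi_triple. apply triple_eq; ring.
Qed.

Lemma lab_T_L1 r x : lab_T L1 r x = x.
Proof.
  rewrite lab_T_eq. destruct_triple x. cbn [lab_u lab_v]. unfold inv_u, inv_v. cbn [hx hy hz].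
  rewrite !phi_triple. cbn [hz]. apply triple_eq; ring.
Qed.

Lemma Lgrp_L1_cocycle r x y : Lgrp L1 r x y = cocycle_mul (heis_form r) x y.
Proof.
  destruct x as [[[a b] c] n], y as [[[a' b'] c'] n']. unfold Lgrp. cbn [sdmul].
  rewrite iterZ_fixed by (apply lab_S_L1 || apply lab_T_L1).
  cbn [cocycle_mul heis_form bilin]. rewrite hmul_triple. f_equal. apply triple_eq; ring.
Qed.

Section TranslationAction.

Variables (r k l : Z) (S T : H -> H).
Hypotheses (Ha : haut r S T) (Hg : S ga = ga) (E1 : S al = (1, 0, k)) (E2 : S be = (0, 1, l)).

Lemma translation_iterZ n a b c : iterZ S T n (a, b, c) = (a, b, c + n * (k * a + l * b)).
Proof.
  pose proof Ha as [_ [HTS HST]].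
  assert (HS : forall a b c, S (a, b, c) = (a, b, c + k * a + l * b)).
  { intros. rewrite (hhom_triple r r S a0 b0 c0 (haut_hom _ _ _ Ha)), Hg, E1, E2.
    unfold ga. hsimpl. apply triple_eq; ring. }
  assert (HT : forall a b c, T (a, b, c) = (a, b, c - k * a - l * b)).
  { intros. rewrite <- (HTS (a0, b0, c0 - k * a0 - l * b0)), HS. f_equal. apply triple_eq; ring. }
  induction n using Z.peano_ind.
  - cbn. apply triple_eq; ring.
  - rewrite iterZ_succ, IHn, HS by exact HST. apply triple_eq; unfold Z.succ; ring.
  - rewrite iterZ_pred, IHn, HT by exact HTS. apply triple_eq; unfold Z.pred; ring.
Qed.

Lemma translation_cocycle x y : sdmul r S T x y = cocycle_mul (twisted_form r k l) x y.
Proof.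
  destruct x as [[[a b] c] n], y as [[[a' b'] c'] n']. cbn [sdmul].
  rewrite translation_iterZ. cbn [cocycle_mul twisted_form bilin]. rewrite hmul_triple.
  f_equal. apply triple_eq; ring.
Qed.

Lemma normal_form_I : 0 < r -> iso (sdmul r S T) (Lgrp L1 (Z.gcd (Z.gcd r k) l)).
Proof.
  intro Hr.
  apply (iso_ext (cocycle_mul (twisted_form r k l)) _ (cocycle_mul (heis_form (Z.gcd (Z.gcd r k) l)))).
  - intros. symmetry. apply translation_cocycle.
  - intros. symmetry. apply Lgrp_L1_cocycle.
  - apply twisted_form_iso, Hr.
Qed.

End TranslationAction.

(** * Reduction of the matrix of S *)

Section RotationConjugacy.

Open Scope R_scope.

Lemma intertwine_scalar p11 p12 p21 p22 a b c d eps : p11 * p22 - p12 * p21 <> 0 ->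
  p11 * a + p12 * c = eps * p11 -> p11 * b + p12 * d = eps * p12 ->
  p21 * a + p22 * c = eps * p21 -> p21 * b + p22 * d = eps * p22 ->
  a = eps /\ b = 0 /\ c = 0 /\ d = eps.
Proof.
  intros Hd Q1 Q2 Q3 Q4. set (dP := p11 * p22 - p12 * p21) in *.
  assert (Z1 : dP * (a - eps) = dP * 0)
    by (transitivity (p22 * (p11 * a + p12 * c - eps * p11) - p12 * (p21 * a + p22 * c - eps * p21));
        [unfold dP; ring | rewrite Q1, Q3; ring]).
  assert (Z2 : dP * b = dP * 0)
    by (transitivity (p22 * (p11 * b + p12 * d - eps * p12) - p12 * (p21 * b + p22 * d - eps * p22));
        [unfold dP; ring | rewrite Q2, Q4; ring]).
  assert (Z3 : dP * c = dP * 0)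
    by (transitivity (p11 * (p21 * a + p22 * c - eps * p21) - p21 * (p11 * a + p12 * c - eps * p11));
        [unfold dP; ring | rewrite Q1, Q3; ring]).
  assert (Z4 : dP * (d - eps) = dP * 0)
    by (transitivity (p11 * (p21 * b + p22 * d - eps * p22) - p21 * (p11 * b + p12 * d - eps * p12));
        [unfold dP; ring | rewrite Q2, Q4; ring]).
  apply Rmult_eq_reg_l in Z1, Z2, Z3, Z4; auto. repeat split; lra.
Qed.

Lemma conj_rotation_facts m11 m12 m21 m22 : conj_to_rotation m11 m12 m21 m22 ->
  (m11 * m22 - m12 * m21 = 1)%Z /\ (-2 <= m11 + m22 <= 2)%Z /\
  ((m11 + m22 = 2)%Z -> m11 = 1%Z /\ m12 = 0%Z /\ m21 = 0%Z /\ m22 = 1%Z) /\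
  ((m11 + m22 = -2)%Z -> m11 = (-1)%Z /\ m12 = 0%Z /\ m21 = 0%Z /\ m22 = (-1)%Z).
Proof.
  intros [p11 [p12 [p21 [p22 [t [Hd [Q1 [Q2 [Q3 Q4]]]]]]]]].
  pose proof (sin2_cos2 t) as Hcs. unfold Rsqr in Hcs. pose proof (COS_bound t) as Hcb.
  set (dP := p11 * p22 - p12 * p21) in *.
  (* determinant and trace of P M P^-1 = R_t *)
  assert (Det : dP * (IZR m11 * IZR m22 - IZR m12 * IZR m21) = dP * 1).
  { transitivity ((p11 * IZR m11 + p12 * IZR m21) * (p21 * IZR m12 + p22 * IZR m22)
                  - (p11 * IZR m12 + p12 * IZR m22) * (p21 * IZR m11 + p22 * IZR m21)); [unfold dP; ring|].
    rewrite Q1, Q2, Q3, Q4, <- Hcs. unfold dP. ring. }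
  assert (Tr : dP * (IZR m11 + IZR m22) = dP * (2 * cos t)).
  { transitivity ((p11 * IZR m11 + p12 * IZR m21) * p22 - (p11 * IZR m12 + p12 * IZR m22) * p21
                  - (p21 * IZR m11 + p22 * IZR m21) * p12 + (p21 * IZR m12 + p22 * IZR m22) * p11);
      [unfold dP; ring|].
    rewrite Q1, Q2, Q3, Q4. unfold dP. ring. }
  apply Rmult_eq_reg_l in Det, Tr; auto.
  rewrite <- !mult_IZR, <- minus_IZR in Det. rewrite <- plus_IZR in Tr.
  split; [apply eq_IZR, Det|]. split; [split; apply le_IZR; rewrite Tr; lra|].
  assert (Hsin : forall eps, cos t = eps -> eps * eps = 1 -> sin t = 0)
    by (intros eps Hc He; rewrite Hc in Hcs; nra).
  split; intro E; rewrite E in Tr.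
  - assert (Hc : cos t = 1) by lra. rewrite Hc, (Hsin 1 Hc ltac:(lra)) in Q1, Q2, Q3, Q4.
    destruct (intertwine_scalar p11 p12 p21 p22 (IZR m11) (IZR m12) (IZR m21) (IZR m22) 1)
      as [X1 [X2 [X3 X4]]]; try assumption; try lra.
    repeat split; apply eq_IZR; assumption.
  - assert (Hc : cos t = -1) by lra. rewrite Hc, (Hsin (-1) Hc ltac:(lra)) in Q1, Q2, Q3, Q4.
    destruct (intertwine_scalar p11 p12 p21 p22 (IZR m11) (IZR m12) (IZR m21) (IZR m22) (-1))
      as [X1 [X2 [X3 X4]]]; try assumption; try lra.
    repeat split; apply eq_IZR; assumption.
Qed.

End RotationConjugacy.

Definition mat2_conj (g m : mat2) : mat2 := mat2_mul (mat2_mul g m) (mat2_adj g).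

Lemma mat2_conj_mul g1 g2 m : mat2_conj g2 (mat2_conj g1 m) = mat2_conj (mat2_mul g2 g1) m.
Proof.
  destruct g1 as [[[a b] c] d], g2 as [[[a' b'] c'] d'], m as [[[x y] z] w].
  unfold mat2_conj, mat2_mul, mat2_adj. f_equal; [f_equal; [f_equal|]|]; ring.
Qed.

Lemma mat2_det_mul g1 g2 : mat2_det (mat2_mul g2 g1) = mat2_det g2 * mat2_det g1.
Proof. destruct g1 as [[[a b] c] d], g2 as [[[a' b'] c'] d']. unfold mat2_det, mat2_mul. ring. Qed.

(* S3, S3^-1, S4, S4^-1, S6, S6^-1, as (m11, m12, m21, m22) *)
Definition elliptic_normal (tau : Z) (N : mat2) : Prop :=
  (tau = -1 /\ (N = (0, -1, 1, -1) \/ N = (-1, 1, -1, 0))) \/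
  (tau = 0 /\ (N = (0, -1, 1, 0) \/ N = (0, 1, -1, 0))) \/
  (tau = 1 /\ (N = (1, -1, 1, 0) \/ N = (0, 1, -1, 1))).

Lemma round_to_multiple c z : c <> 0 -> exists t, Z.abs (z + 2 * t * c) <= Z.abs c.
Proof.
  intro Hc. set (w := Z.abs c). assert (Hw : 0 < w) by (unfold w; lia).
  pose proof (Z_div_mod_eq_full z (2 * w)). pose proof (Z.mod_pos_bound z (2 * w) ltac:(lia)).
  set (q := z / (2 * w)) in *. set (rho := z mod (2 * w)) in *.
  assert (Hsg : c = w \/ c = - w) by (unfold w; lia).
  destruct (Z_le_gt_dec rho w).
  - destruct Hsg as [Hs|Hs]; [exists (- q)|exists q]; rewrite Hs; unfold w at 1; lia.
  - destruct Hsg as [Hs|Hs]; [exists (- (q + 1))|exists (q + 1)]; rewrite Hs; unfold w at 1; lia.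
Qed.

(* With the diagonal balanced and |c| <= |b|, the identity -4bc = (a - d)^2 + 4 - tau^2
   forces |c| = 1. *)
Lemma reduced_offdiag_unit a b c d tau : a * d - b * c = 1 -> a + d = tau -> -1 <= tau <= 1 ->
  Z.abs (2 * a - tau) <= Z.abs c -> Z.abs c <= Z.abs b -> c <> 0 -> c = 1 \/ c = -1.
Proof.
  intros Hd Ht Htau Hu Hb Hc. set (u := 2 * a - tau) in *.
  assert (E : - 4 * (b * c) = u * u + 4 - tau * tau).
  { unfold u. replace d with (tau - a) in Hd by lia. nia. }
  assert (Htau2 : tau * tau <= 1) by nia.
  pose proof (Z.square_nonneg u) as Hu0.
  assert (Hu2 : u * u <= c * c).
  { rewrite <- (Z.abs_square u), <- (Z.abs_square c). apply Z.mul_le_mono_nonneg; lia. }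
  assert (Hbc : c * c <= - (b * c)).
  { assert (H : Z.abs c * Z.abs c <= Z.abs b * Z.abs c) by (apply Z.mul_le_mono_nonneg_r; lia).
    rewrite <- (Z.abs_mul b c), (Z.abs_square c), (Z.abs_neq (b * c)) in H by lia. lia. }
  pose proof (Z.square_nonneg tau). assert (Hc2 : c * c <= 1) by lia.
  nia.
Qed.

Lemma reduced_base a b c d tau : a * d - b * c = 1 -> a + d = tau -> -1 <= tau <= 1 ->
  Z.abs (2 * a - tau) <= Z.abs c -> Z.abs c <= Z.abs b -> c <> 0 ->
  exists g, mat2_det g = 1 /\ elliptic_normal tau (mat2_conj g (a, b, c, d)).
Proof.
  intros Hd Ht Htau Hu Hb Hc.
  pose proof (reduced_offdiag_unit a b c d tau Hd Ht Htau Hu Hb Hc) as Hc1.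
  assert (Ha : a = -1 \/ a = 0 \/ a = 1) by lia.
  assert (Htau3 : tau = -1 \/ tau = 0 \/ tau = 1) by lia.
  destruct Hc1 as [->| ->], Ha as [->|[->| ->]], Htau3 as [->|[->| ->]]; try lia;
    match goal with Ht : ?x + d = ?y |- _ => assert (d = y - x) by lia end; subst d; cbn in *;
    first [assert (b = 1) by lia | assert (b = -1) by lia | assert (b = 0) by lia]; subst b;
    first [ exists (1, 0, 0, 1); split; [reflexivity|]; unfold elliptic_normal; vm_compute; tauto
          | exists (1, 1, 0, 1); split; [reflexivity|]; unfold elliptic_normal; vm_compute; tauto ].
Qed.

(* Conjugating by [[1, t], [0, 1]] balances the diagonal; if then |b| < |c|,
   conjugating by [[0, -1], [1, 0]] swaps b and c and decreases |c|. *)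
Lemma elliptic_reduce_bounded n : forall a b c d tau, Z.abs c <= Z.of_nat n ->
  a * d - b * c = 1 -> a + d = tau -> -1 <= tau <= 1 ->
  exists g, mat2_det g = 1 /\ elliptic_normal tau (mat2_conj g (a, b, c, d)).
Proof.
  induction n as [|n IH]; intros a b c d tau Hn Hd Ht Htau.
  { assert (c = 0) by lia. subst c. exfalso.
    assert (Had : a * d = 1) by lia. destruct (Z.eq_mul_1 a d Had) as [-> | ->]; lia. }
  destruct (Z.eq_dec c 0) as [->|Hc].
  { exfalso. assert (Had : a * d = 1) by lia. destruct (Z.eq_mul_1 a d Had) as [-> | ->]; lia. }
  destruct (round_to_multiple c (2 * a - tau) Hc) as [t Hr].
  set (E := (1, t, 0, 1) : mat2).
  set (a1 := a + t * c). set (b1 := b + t * (d - a) - t * t * c). set (d1 := d - t * c).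
  assert (HE : mat2_conj E (a, b, c, d) = (a1, b1, c, d1)).
  { unfold mat2_conj, E, mat2_mul, mat2_adj, a1, b1, d1. f_equal; [f_equal; [f_equal|]|]; ring. }
  assert (Hd1 : a1 * d1 - b1 * c = 1) by (unfold a1, b1, d1; nia).
  assert (Ht1 : a1 + d1 = tau) by (unfold a1, d1; lia).
  assert (Hr1 : Z.abs (2 * a1 - tau) <= Z.abs c).
  { unfold a1. replace (2 * (a + t * c) - tau) with (2 * a - tau + 2 * t * c) by ring. exact Hr. }
  destruct (Z_lt_le_dec (Z.abs b1) (Z.abs c)) as [Hlt|Hge].
  - set (W := (0, -1, 1, 0) : mat2).
    assert (HW : mat2_conj W (a1, b1, c, d1) = (d1, - c, - b1, a1)).
    { unfold mat2_conj, W, mat2_mul, mat2_adj. f_equal; [f_equal; [f_equal|]|]; ring. }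
    destruct (IH d1 (- c) (- b1) a1 tau) as [g [Hg HT]]; [lia|nia|lia|lia|].
    exists (mat2_mul g (mat2_mul W E)). split.
    + rewrite !mat2_det_mul, Hg. unfold W, E, mat2_det. ring.
    + rewrite <- !mat2_conj_mul, HE, HW. exact HT.
  - destruct (reduced_base a1 b1 c d1 tau Hd1 Ht1 Htau Hr1 Hge Hc) as [g [Hg HT]].
    exists (mat2_mul g E). split.
    + rewrite mat2_det_mul, Hg. unfold E, mat2_det. ring.
    + rewrite <- mat2_conj_mul, HE. exact HT.
Qed.

Lemma elliptic_reduce a b c d : a * d - b * c = 1 -> -1 <= a + d <= 1 ->
  exists g, mat2_det g = 1 /\ elliptic_normal (a + d) (mat2_conj g (a, b, c, d)).
Proof. intros. apply (elliptic_reduce_bounded (Z.to_nat (Z.abs c))); auto. lia. Qed.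
Lemma lin_phi r u v : lin (phi r u v) = (hx u, hx v, hy u, hy v).
Proof. unfold lin, sbar11, sbar12, sbar21, sbar22. rewrite phi_al, phi_be. reflexivity. Qed.

Lemma mat2_left_inverse x m : mat2_mul x m = (1, 0, 0, 1) -> mat2_det m = 1 -> x = mat2_adj m.
Proof.
  destruct x as [[[x11 x12] x21] x22], m as [[[m11 m12] m21] m22]. cbn.
  intros E Hd. injection E as E11 E12 E21 E22.
  assert (Row : forall y1 y2, y1 = (y1 * m11 + y2 * m21) * m22 - (y1 * m12 + y2 * m22) * m21 /\
                              y2 = (y1 * m12 + y2 * m22) * m11 - (y1 * m11 + y2 * m21) * m12).
  { intros. split.
    - transitivity (y1 * (m11 * m22 - m12 * m21)); [rewrite Hd|]; ring.
    - transitivity (y2 * (m11 * m22 - m12 * m21)); [rewrite Hd|]; ring. }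
  destruct (Row x11 x12) as [R1 R2], (Row x21 x22) as [R3 R4].
  rewrite E11, E12 in R1, R2. rewrite E21, E22 in R3, R4.
  f_equal; [f_equal; [f_equal|]|]; lia.
Qed.

Lemma lin_inverse r S T : haut r S T -> S ga = ga -> mat2_det (lin S) = 1 ->
  T ga = ga /\ lin T = mat2_adj (lin S).
Proof.
  intros Ha Hg Hd. pose proof Ha as [_ [HTS _]].
  assert (Tg : T ga = ga) by (rewrite <- Hg at 1; apply HTS).
  split; [exact Tg|]. apply mat2_left_inverse; [|exact Hd].
  rewrite <- (lin_comp r r T S 1 (haut_hom _ _ _ (haut_sym _ _ _ Ha)) Tg).
  unfold lin, sbar11, sbar12, sbar21, sbar22. rewrite !HTS. reflexivity.
Qed.

(* S gamma is central, i.e. gamma^e, and the image of the defining relation gives e = det. *)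
Lemma haut_fixes_ga r S T : 0 < r -> haut r S T -> mat2_det (lin S) = 1 -> S ga = ga.
Proof.
  intros Hr Ha Hd. pose proof Ha as [HS [_ HST]].
  assert (Hc : S ga = (0, 0, hz (S ga))).
  { apply (central_triple r); [exact Hr|]. intro y.
    rewrite <- (HST y), <- !HS, ga_central. reflexivity. }
  pose proof (hhom_det r r S _ HS Hc) as E. rewrite Hd in E.
  apply Z.mul_reg_l in E; [|lia]. rewrite Hc, <- E. reflexivity.
Qed.

Lemma sd_iso_transport r S T g : haut r S T -> S ga = ga -> mat2_det g = 1 ->
  exists S' T', haut r S' T' /\ iso (sdmul r S T) (sdmul r S' T') /\ S' ga = ga /\
    lin S' = mat2_conj g (lin S).
Proof.
  destruct g as [[[g11 g12] g21] g22]. intros Ha Hg Hd.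
  set (u := (g11, g21, 0) : H). set (v := (g12, g22, 0) : H).
  assert (Hdet : hdet u v = 1) by (unfold hdet, u, v; cbn in *; lia).
  set (A := phi r u v). set (B := phi r (inv_u r u v) (inv_v r u v)).
  pose proof (phi_haut r u v Hdet) as HA. fold A B in HA.
  pose proof HA as [HAh [HBA HAB]]. pose proof (haut_hom _ _ _ (haut_sym _ _ _ HA)) as HBh.
  pose proof Ha as [HSh [HTS HST]].
  assert (HS' : haut r (fun x => A (S (B x))) (fun x => A (T (B x)))).
  { split; [|split]; intros; cbv beta.
    - rewrite HBh, HSh, HAh. reflexivity.
    - rewrite HBA, HTS, HAB. reflexivity.
    - rewrite HBA, HST, HAB. reflexivity. }
  assert (Ag : A ga = ga) by apply phi_ga.
  assert (Bg : B ga = ga) by apply phi_ga.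
  exists (fun x => A (S (B x))), (fun x => A (T (B x))). split; [exact HS'|split; [|split]].
  - apply (sd_iso_conj r r S T _ _ A B hone Ha HS' HAh HBA HAB).
    intro h. rewrite HBA, hmul_1l, hmul_1r. reflexivity.
  - rewrite Bg, Hg, Ag. reflexivity.
  - rewrite (lin_comp r r A _ 1 HAh Ag), (lin_comp r r S B 1 HSh Hg).
    destruct (lin_inverse r A B HA Ag) as [_ ->]; [unfold A; rewrite lin_phi; exact Hd|].
    unfold A. rewrite lin_phi. unfold u, v. cbn [hx hy].
    destruct (lin S) as [[[m11 m12] m21] m22].
    unfold mat2_conj, mat2_mul, mat2_adj. f_equal; [f_equal; [f_equal|]|]; ring.
Qed.

(** * Every discrete oscillator group is in the list *)

Definition classified (m : G -> G -> G) : Prop :=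
  exists (i : lab) (s : Z), lab_valid i s /\ iso m (Lgrp i s).

Lemma classified_iso m m' : iso m m' -> classified m' -> classified m.
Proof. intros I [i [s [V J]]]. exists i, s. split; [exact V|]. eapply iso_trans; eassumption. Qed.

Lemma classified_lin r S T : 0 < r -> haut r S T -> S ga = ga ->
  lin S = (1, 0, 0, 1) \/ lin S = (-1, 0, 0, -1) \/ lin S = (0, -1, 1, -1) \/
  lin S = (0, -1, 1, 0) \/ lin S = (1, -1, 1, 0) ->
  classified (sdmul r S T).
Proof.
  intros Hr Ha Hg HS. pose proof (triple_eta (S al)) as Ea. pose proof (triple_eta (S be)) as Eb.
  unfold lin, sbar11, sbar12, sbar21, sbar22 in HS.
  destruct HS as [HS|[HS|[HS|[HS|HS]]]]; injection HS as F1 F2 F3 F4;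
    rewrite F1, F3 in Ea; rewrite F2, F4 in Eb.
  - exists L1, (Z.gcd (Z.gcd r (hz (S al))) (hz (S be))). split.
    + split; [|exact I]. pose proof (Z.gcd_nonneg (Z.gcd r (hz (S al))) (hz (S be))).
      enough (Z.gcd (Z.gcd r (hz (S al))) (hz (S be)) <> 0) by lia.
      intro E. apply Z.gcd_eq_0 in E as [E _]. apply Z.gcd_eq_0 in E. lia.
    + exact (normal_form_I r _ _ S T Ha Hg Ea Eb Hr).
  - destruct (normal_form_S2 r (hz (S al)) (hz (S be)) S T Ha Hg Ea Eb) as [X Y].
    destruct (classic (Z.Odd r \/ (Z.Even (hz (S al)) /\ Z.Even (hz (S be))))) as [C|C].
    + exists L2, r. split; [split; [exact Hr|exact I]|auto].
    + exists L2p, r. split; [|auto]. split; [exact Hr|]. cbn.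
      destruct (Z.Even_or_Odd r) as [Ev|Od]; [exact Ev|tauto].
  - destruct (normal_form_S3 r (hz (S al)) (hz (S be)) S T Ha Hg Ea Eb) as [X Y].
    destruct (classic (~ (3 | r) \/ hz (S al) mod 3 = hz (S be) mod 3)) as [C|C].
    + exists L3, r. split; [split; [exact Hr|exact I]|auto].
    + exists L3p, r. split; [|auto]. split; [exact Hr|]. cbn. apply NNPP. tauto.
  - destruct (normal_form_S4 r (hz (S al)) (hz (S be)) S T Ha Hg Ea Eb) as [X Y].
    destruct (classic (Z.Odd r \/ hz (S al) mod 2 = hz (S be) mod 2)) as [C|C].
    + exists L4, r. split; [split; [exact Hr|exact I]|auto].
    + exists L4p, r. split; [|auto]. split; [exact Hr|]. cbn.
      destruct (Z.Even_or_Odd r) as [Ev|Od]; [exact Ev|tauto].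
  - exists L6, r. split; [split; [exact Hr|exact I]|].
    exact (normal_form_S6 r _ _ S T Ha Hg Ea Eb).
Qed.

Lemma classified_elliptic r S T tau : 0 < r -> haut r S T -> S ga = ga ->
  elliptic_normal tau (lin S) -> classified (sdmul r S T).
Proof.
  intros Hr Ha Hg HN.
  assert (Inv : forall N, lin S = N -> mat2_det N = 1 ->
            (mat2_adj N = (0, -1, 1, -1) \/ mat2_adj N = (0, -1, 1, 0) \/ mat2_adj N = (1, -1, 1, 0)) ->
            classified (sdmul r S T)).
  { intros N HSN Hd HA. rewrite <- HSN in Hd, HA.
    destruct (lin_inverse r S T Ha Hg Hd) as [Tg HT].
    apply (classified_iso _ _ (sd_iso_swap r S T)).
    apply (classified_lin r T S Hr (haut_sym _ _ _ Ha) Tg). rewrite HT. tauto. }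
  destruct HN as [[_ [HN|HN]]|[[_ [HN|HN]]|[_ [HN|HN]]]];
    first [ apply (classified_lin r S T Hr Ha Hg); rewrite HN; tauto
          | apply (Inv _ HN); [reflexivity | cbn; tauto] ].
Qed.

Lemma osc_classified r S T : osc_data r S T -> classified (sdmul r S T).
Proof.
  intros [Hr [Ha Hrot]].
  destruct (conj_rotation_facts _ _ _ _ Hrot) as [Hdet [Hbd [Htr2 Htrm2]]].
  assert (Hd : mat2_det (lin S) = 1) by exact Hdet.
  pose proof (haut_fixes_ga r S T Hr Ha Hd) as Hg.
  destruct (Z.eq_dec (sbar11 S + sbar22 S) 2) as [T2|T2].
  { apply (classified_lin r S T Hr Ha Hg). left. unfold lin.
    destruct (Htr2 T2) as [-> [-> [-> ->]]]. reflexivity. }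
  destruct (Z.eq_dec (sbar11 S + sbar22 S) (-2)) as [Tm2|Tm2].
  { apply (classified_lin r S T Hr Ha Hg). right; left. unfold lin.
    destruct (Htrm2 Tm2) as [-> [-> [-> ->]]]. reflexivity. }
  destruct (elliptic_reduce (sbar11 S) (sbar12 S) (sbar21 S) (sbar22 S) Hdet ltac:(lia))
    as [g [Hgd HN]].
  destruct (sd_iso_transport r S T g Ha Hg Hgd) as [S' [T' [Ha' [Hi [Hg' Hl]]]]].
  apply (classified_iso _ _ Hi), (classified_elliptic r S' T' (sbar11 S + sbar22 S) Hr Ha' Hg').
  rewrite Hl. exact HN.
Qed.

(** * Isomorphism invariants *)

Lemma heis_character_pow r psi x n : is_character (hmul r) psi -> psi (hpow r x n) = n * psi x.
Proof.
  intro Hp. assert (Hadd : forall m, psi (hpow r x (m + 1)) = psi (hpow r x m) + psi x).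
  { intro m. rewrite hpow_add, Hp, hpow_1. reflexivity. }
  induction n using Z.peano_ind.
  - rewrite hpow_0. pose proof (Hp hone hone) as E. rewrite hmul_1l in E. lia.
  - rewrite <- Z.add_1_r, Hadd, IHn. ring.
  - specialize (Hadd (Z.pred n)). rewrite Z.add_1_r, Z.succ_pred, IHn in Hadd. lia.
Qed.

Lemma heis_character_triple r psi a b c : is_character (hmul r) psi ->
  psi (a, b, c) = a * psi al + b * psi be + c * psi ga.
Proof. intro Hp. rewrite (triple_decomp r a b c), !Hp, !(heis_character_pow r psi _ _ Hp). ring. Qed.

Lemma heis_character_ga r psi : 0 < r -> is_character (hmul r) psi -> psi ga = 0.
Proof.
  intros Hr Hp. pose proof (f_equal psi (heis_relation r)) as E.
  rewrite !Hp, (heis_character_pow r psi _ _ Hp) in E.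
  assert (Z : r * psi ga = 0) by lia. apply Z.mul_eq_0 in Z. lia.
Qed.

Lemma sd_character_decomp r S T chi h n : haut r S T -> is_character (sdmul r S T) chi ->
  chi (h, n) = chi (h, 0) + n * chi (hone, 1).
Proof.
  intros Ha Hc.
  assert (Hstep : forall m, chi (hone, m + 1) = chi (hone, m) + chi (hone, 1)).
  { intro m. rewrite <- Hc. cbn [sdmul]. rewrite (hhom_one r r _ (iterZ_hom r S T m Ha)), hmul_1l.
    reflexivity. }
  assert (Hpow : forall m, chi (hone, m) = m * chi (hone, 1)).
  { induction m using Z.peano_ind.
    - pose proof (Hc (hone, 0) (hone, 0)) as E. cbn [sdmul iterZ] in E.
      rewrite hmul_1l, Z.add_0_r in E. lia.
    - rewrite <- Z.add_1_r, Hstep, IHm. ring.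
    - specialize (Hstep (Z.pred m)). rewrite Z.add_1_r, Z.succ_pred, IHm in Hstep. lia. }
  rewrite <- Hpow, <- Hc. cbn [sdmul iterZ]. rewrite hmul_1r. reflexivity.
Qed.

Lemma sd_delta_conj r S T h : sdmul r S T (hone, 1) (h, 0) = sdmul r S T (S h, 0) (hone, 1).
Proof. cbn [sdmul iterZ Pos.iter]. rewrite hmul_1l, hmul_1r. reflexivity. Qed.

Lemma fixed_vector_zero u1 u2 v1 v2 x y : u1 * x + u2 * y = x -> v1 * x + v2 * y = y ->
  (u1 - 1) * (v2 - 1) - u2 * v1 <> 0 -> x = 0 /\ y = 0.
Proof.
  intros E1 E2 Hd.
  assert (Dx : ((u1 - 1) * (v2 - 1) - u2 * v1) * x = 0).
  { transitivity ((v2 - 1) * (u1 * x + u2 * y - x) - u2 * (v1 * x + v2 * y - y)); [ring|].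
    rewrite E1, E2. ring. }
  assert (Dy : ((u1 - 1) * (v2 - 1) - u2 * v1) * y = 0).
  { transitivity ((u1 - 1) * (v1 * x + v2 * y - y) - v1 * (u1 * x + u2 * y - x)); [ring|].
    rewrite E1, E2. ring. }
  apply Z.mul_eq_0 in Dx, Dy. lia.
Qed.

Lemma lab_fixed_free i r : i <> L1 ->
  (hx (lab_u i r) - 1) * (hy (lab_v i r) - 1) - hy (lab_u i r) * hx (lab_v i r) <> 0.
Proof. intro Hi. destruct i; [now destruct Hi| ..]; discriminate. Qed.

(* psi is S-invariant, and S - I is invertible over Q unless S = id. *)
Lemma Lgrp_character_heis i r chi : i <> L1 -> 0 < r -> is_character (Lgrp i r) chi ->
  forall h, chi (h, 0) = 0.
Proof.
  intros Hi Hr Hc. set (psi := fun h => chi (h, 0)).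
  assert (Hp : is_character (hmul r) psi) by (intros x y; apply (Hc (x, 0) (y, 0))).
  pose proof (heis_character_ga r psi Hr Hp) as Hg.
  assert (Hinv : forall h, psi (lab_S i r h) = psi h).
  { intro h. pose proof (f_equal chi (sd_delta_conj r (lab_S i r) (lab_T i r) h)) as E.
    unfold Lgrp in Hc. rewrite !Hc in E. unfold psi. lia. }
  pose proof (Hinv al) as C1. pose proof (Hinv be) as C2.
  rewrite lab_S_eq, phi_al, (triple_eta (lab_u i r)), (heis_character_triple r psi _ _ _ Hp), Hg,
    Z.mul_0_r, Z.add_0_r in C1.
  rewrite lab_S_eq, phi_be, (triple_eta (lab_v i r)), (heis_character_triple r psi _ _ _ Hp), Hg,
    Z.mul_0_r, Z.add_0_r in C2.
  destruct (fixed_vector_zero _ _ _ _ _ _ C1 C2 (lab_fixed_free i r Hi)) as [Za Zb].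
  intro h. change (psi h = 0). destruct_triple h.
  rewrite (heis_character_triple r psi _ _ _ Hp), Za, Zb, Hg. ring.
Qed.

Lemma not_iso_Lgrp_L1 i r s : i <> L1 -> 0 < r -> ~ iso (Lgrp i r) (Lgrp L1 s).
Proof.
  intros Hi Hr [f [Hf [g [_ Hfg]]]].
  set (pa := fun x : G => hx (fst (f x))). set (pb := fun x : G => hy (fst (f x))).
  assert (Ha : is_character (Lgrp i r) pa).
  { intros x y. unfold pa. rewrite Hf, Lgrp_L1_cocycle.
    destruct (f x) as [[[a b] c] n], (f y) as [[[a' b'] c'] n']. reflexivity. }
  assert (Hb : is_character (Lgrp i r) pb).
  { intros x y. unfold pb. rewrite Hf, Lgrp_L1_cocycle.
    destruct (f x) as [[[a b] c] n], (f y) as [[[a' b'] c'] n']. reflexivity. }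
  pose proof (lab_haut i r) as Hl.
  assert (Fa : forall h n, pa (h, n) = n * pa (hone, 1)).
  { intros h n. rewrite (sd_character_decomp r _ _ pa h n Hl Ha), (Lgrp_character_heis i r pa Hi Hr Ha).
    reflexivity. }
  assert (Fb : forall h n, pb (h, n) = n * pb (hone, 1)).
  { intros h n. rewrite (sd_character_decomp r _ _ pb h n Hl Hb), (Lgrp_character_heis i r pb Hi Hr Hb).
    reflexivity. }
  destruct (g ((1, 0, 0), 0)) as [h1 n1] eqn:E1, (g ((0, 1, 0), 0)) as [h2 n2] eqn:E2.
  assert (A1 : pa (h1, n1) = 1) by (unfold pa; rewrite <- E1, Hfg; reflexivity).
  assert (B1 : pb (h1, n1) = 0) by (unfold pb; rewrite <- E1, Hfg; reflexivity).
  assert (B2 : pb (h2, n2) = 1) by (unfold pb; rewrite <- E2, Hfg; reflexivity).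
  rewrite Fa in A1. rewrite Fb in B1, B2.
  assert (X : n1 * pb (hone, 1) = 0) by exact B1. apply Z.mul_eq_0 in X as [->|X]; lia.
Qed.

Definition L1_inv (s : Z) : G -> G := sd_inv s (lab_S L1 s) (lab_T L1 s).

Ltac pair_eq := repeat apply (f_equal2 pair); unfold Z.pred, Z.succ; try ring.

Lemma L1_gpow_central s c k n :
  gpow (Lgrp L1 s) sd_one (L1_inv s) ((0, 0, c), k) n = ((0, 0, n * c), n * k).
Proof.
  pose proof (sd_group _ _ _ (lab_haut L1 s)) as Gp. induction n using Z.peano_ind.
  - reflexivity.
  - rewrite gpow_succ, IHn by exact Gp. rewrite Lgrp_L1_cocycle. cbn [cocycle_mul bilin heis_form]. pair_eq.
  - rewrite gpow_pred, IHn by exact Gp.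
    assert (Ei : L1_inv s ((0, 0, c), k) = ((0, 0, - c), - k)).
    { unfold L1_inv. cbn [sd_inv]. rewrite iterZ_fixed by (apply lab_S_L1 || apply lab_T_L1).
      unfold hinv. rewrite hpow_triple. pair_eq. }
    rewrite Ei, Lgrp_L1_cocycle. cbn [cocycle_mul bilin heis_form]. pair_eq.
Qed.

Lemma L1_central s z : 0 < s -> (forall y, Lgrp L1 s z y = Lgrp L1 s y z) ->
  exists c n, z = ((0, 0, c), n).
Proof.
  intros Hs C. pose proof (C ((1, 0, 0), 0)) as E1. pose proof (C ((0, 1, 0), 0)) as E2.
  rewrite !Lgrp_L1_cocycle in E1, E2. destruct z as [[[a b] c] n].
  cbn [cocycle_mul bilin heis_form] in E1, E2.
  apply (f_equal (fun x => hz (fst x))) in E1, E2. cbn [hz fst] in E1, E2.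
  assert (Xa : s * a = 0) by lia. assert (Xb : s * b = 0) by lia.
  apply Z.mul_eq_0 in Xa, Xb. exists c, n. f_equal. apply triple_eq; lia.
Qed.

Section L1Invariant.

Variables (r s : Z) (f g : G -> G).
Hypotheses (Hr : 0 < r) (Hs : 0 < s).
Hypothesis Hf : forall x y, f (Lgrp L1 r x y) = Lgrp L1 s (f x) (f y).
Hypothesis Hfg : forall y, f (g y) = y.

Let gamma : G := ((0, 0, 1), 0).

Lemma L1_hom_gpow x n :
  f (gpow (Lgrp L1 r) sd_one (L1_inv r) x n) = gpow (Lgrp L1 s) sd_one (L1_inv s) (f x) n.
Proof.
  exact (group_hom_pow _ _ _ _ _ _ (sd_group _ _ _ (lab_haut L1 r)) (sd_group _ _ _ (lab_haut L1 s))
           f Hf x n).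
Qed.

(* f gamma is central, say gamma^c delta^n0; the image of alpha beta = gamma^r beta alpha
   forces n0 = 0 and s * det = r * c. *)
Lemma L1_param_divides : exists c, f gamma = ((0, 0, c), 0) /\ (s | r * c).
Proof.
  assert (Cf : forall y, Lgrp L1 s (f gamma) y = Lgrp L1 s y (f gamma)).
  { intro y. rewrite <- (Hfg y), <- !Hf, !Lgrp_L1_cocycle.
    destruct (g y) as [[[a b] c] n]. unfold gamma. cbn [cocycle_mul bilin heis_form]. f_equal. pair_eq. }
  destruct (L1_central s (f gamma) Hs Cf) as [c [n0 Ez]].
  assert (Rel : Lgrp L1 r ((1, 0, 0), 0) ((0, 1, 0), 0) =
                Lgrp L1 r (gpow (Lgrp L1 r) sd_one (L1_inv r) gamma r)
                          (Lgrp L1 r ((0, 1, 0), 0) ((1, 0, 0), 0))).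
  { unfold gamma. rewrite L1_gpow_central, !Lgrp_L1_cocycle. cbn [cocycle_mul bilin heis_form]. pair_eq. }
  apply (f_equal f) in Rel. rewrite !Hf, L1_hom_gpow, Ez, L1_gpow_central, !Lgrp_L1_cocycle in Rel.
  destruct (f ((1, 0, 0), 0)) as [[[x1 x2] x3] m1], (f ((0, 1, 0), 0)) as [[[y1 y2] y3] m2].
  cbn in Rel. injection Rel as R1 R2 R3 R4.
  assert (n0 = 0) by nia. subst n0.
  exists c. split; [exact Ez|]. exists (x1 * y2 - x2 * y1). nia.
Qed.

End L1Invariant.

Lemma L1_param_eq r s : 0 < r -> 0 < s -> iso (Lgrp L1 r) (Lgrp L1 s) -> r = s.
Proof.
  intros Hr Hs I. destruct I as [f [Hf [g [Hgf Hfg]]]].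
  assert (Hg : forall x y, g (Lgrp L1 s x y) = Lgrp L1 r (g x) (g y)).
  { intros x y. rewrite <- (Hfg x), <- (Hfg y), <- Hf, !Hgf. reflexivity. }
  destruct (L1_param_divides r s f g Hr Hs Hf Hfg) as [c [Ec Dc]].
  destruct (L1_param_divides s r g f Hs Hr Hg Hgf) as [c' [Ec' Dc']].
  assert (Hcc : c * c' = 1).
  { pose proof (Hfg ((0, 0, 1), 0)) as E. rewrite Ec' in E.
    replace ((0, 0, c'), 0) with (gpow (Lgrp L1 r) sd_one (L1_inv r) ((0, 0, 1), 0) c') in E
      by (rewrite L1_gpow_central; pair_eq).
    rewrite (L1_hom_gpow r s f Hf), Ec, L1_gpow_central in E. injection E as E. lia. }
  assert (Hc : c = 1 \/ c = -1) by (apply (Z.eq_mul_1 c c'); exact Hcc).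
  assert (Hc' : c' = 1 \/ c' = -1) by (apply (Z.eq_mul_1 c' c); lia).
  apply Z.divide_antisym_nonneg; try lia.
  - destruct Hc' as [->| ->]; [rewrite Z.mul_1_r in Dc'; exact Dc'|].
    apply Z.divide_opp_r. replace (- s) with (s * -1) by ring. exact Dc'.
  - destruct Hc as [->| ->]; [rewrite Z.mul_1_r in Dc; exact Dc|].
    apply Z.divide_opp_r. replace (- r) with (r * -1) by ring. exact Dc.
Qed.

Lemma heis_iso_param r s A B : 0 < r -> 0 < s -> hhom r s A -> hhom s r B ->
  (forall x, B (A x) = x) -> (forall y, A (B y) = y) ->
  r = s /\ exists c, A ga = (0, 0, c) /\ (c = 1 \/ c = -1) /\ mat2_det (lin A) = c.
Proof.
  intros Hr Hs HA HB HBA HAB.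
  assert (CA : A ga = (0, 0, hz (A ga))).
  { apply (central_triple s); [exact Hs|]. intro y. rewrite <- (HAB y), <- !HA, ga_central. reflexivity. }
  assert (CB : B ga = (0, 0, hz (B ga))).
  { apply (central_triple r); [exact Hr|]. intro y. rewrite <- (HBA y), <- !HB, ga_central. reflexivity. }
  set (c := hz (A ga)) in *. set (c' := hz (B ga)) in *.
  assert (Ecc : c * c' = 1).
  { pose proof (HAB ga) as E. rewrite CB in E.
    replace (0, 0, c') with (hpow r ga c') in E by (unfold ga; rewrite hpow_triple; apply triple_eq; ring).
    rewrite (hhom_pow r s A ga c' HA), CA, hpow_triple in E. unfold ga in E.
    apply (f_equal hz) in E. cbn [hz] in E. lia. }
  pose proof (hhom_det r s A c HA CA) as R1. pose proof (hhom_det s r B c' HB CB) as R2.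
  assert (Hc : c = 1 \/ c = -1) by exact (Z.eq_mul_1 c c' Ecc).
  assert (Hdd : mat2_det (lin A) * mat2_det (lin B) = 1).
  { apply (Z.mul_reg_l _ _ (r * s)); [nia|].
    transitivity ((s * mat2_det (lin A)) * (r * mat2_det (lin B))); [ring|]. rewrite R1, R2.
    transitivity (r * s * (c * c')); [ring|]. rewrite Ecc. ring. }
  assert (Hd : mat2_det (lin A) = 1 \/ mat2_det (lin A) = -1) by exact (Z.eq_mul_1 _ _ Hdd).
  assert (r = s /\ mat2_det (lin A) = c) as [Hrs Hdc]
    by (destruct Hc as [Ec|Ec], Hd as [Ed|Ed]; rewrite Ec, Ed in R1; split; lia).
  split; [exact Hrs|]. exists c. repeat split; assumption.
Qed.

(* delta h delta^-1 = S_i h in L^i_r becomes h0 S_j^e(A h) h0^-1 = A (S_i h) in L^j_r. *)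
Definition conj_rel (i j : lab) (r : Z) (A : H -> H) (h0 : H) (e : Z) : Prop :=
  forall h, hmul r h0 (iterZ (lab_S j r) (lab_T j r) e (A h)) = hmul r (A (lab_S i r h)) h0.

Lemma iso_snd_linear i r j s f : i <> L1 -> 0 < r ->
  (forall x y, f (Lgrp i r x y) = Lgrp j s (f x) (f y)) ->
  forall h n, snd (f (h, n)) = n * snd (f (hone, 1)).
Proof.
  intros Hi Hr Hf h n.
  assert (Hc : is_character (Lgrp i r) (fun x => snd (f x))).
  { intros x y. rewrite Hf. destruct (f x), (f y). reflexivity. }
  rewrite (sd_character_decomp r _ _ _ h n (lab_haut i r) Hc), (Lgrp_character_heis i r _ Hi Hr Hc).
  reflexivity.
Qed.

(* For i, j <> L1 an isomorphism preserves the subgroup H_1^r(Z), since it is the common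
   kernel of all characters, and sends delta to h0 delta^e. *)
Lemma iso_Lgrp_structure i j r s : i <> L1 -> j <> L1 -> 0 < r -> 0 < s ->
  iso (Lgrp i r) (Lgrp j s) ->
  r = s /\ exists A h0 e c, hhom r r A /\ A ga = (0, 0, c) /\ (c = 1 \/ c = -1) /\
    mat2_det (lin A) = c /\ (e = 1 \/ e = -1) /\ conj_rel i j r A h0 e.
Proof.
  intros Hi Hj Hr Hs [f [Hf [g [Hgf Hfg]]]].
  assert (Hg : forall x y, g (Lgrp j s x y) = Lgrp i r (g x) (g y)).
  { intros x y. rewrite <- (Hfg x), <- (Hfg y), <- Hf, !Hgf. reflexivity. }
  pose proof (iso_snd_linear i r j s f Hi Hr Hf) as Fp.
  pose proof (iso_snd_linear j s i r g Hj Hs Hg) as Fq.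
  destruct (f (hone, 1)) as [h0 e] eqn:Ef1. destruct (g (hone, 1)) as [h0' e'] eqn:Eg1.
  cbn [snd] in Fp, Fq.
  assert (He : e = 1 \/ e = -1).
  { apply (Z.eq_mul_1 e e'). pose proof (f_equal snd (Hgf (hone, 1))) as E.
    rewrite Ef1, Fq in E. cbn in E. lia. }
  set (A := fun h => fst (f (h, 0))). set (B := fun h => fst (g (h, 0))).
  assert (EA : forall h, f (h, 0) = (A h, 0)).
  { intro h. unfold A. specialize (Fp h 0). destruct (f (h, 0)). cbn in *. rewrite Fp. reflexivity. }
  assert (EB : forall h, g (h, 0) = (B h, 0)).
  { intro h. unfold B. specialize (Fq h 0). destruct (g (h, 0)). cbn in *. rewrite Fq. reflexivity. }
  assert (HA : hhom r s A).
  { intros x y. pose proof (Hf (x, 0) (y, 0)) as E. unfold Lgrp in E. cbn [sdmul iterZ] in E.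
    rewrite !EA in E. cbn [sdmul iterZ] in E. exact (f_equal fst E). }
  assert (HB : hhom s r B).
  { intros x y. pose proof (Hg (x, 0) (y, 0)) as E. unfold Lgrp in E. cbn [sdmul iterZ] in E.
    rewrite !EB in E. cbn [sdmul iterZ] in E. exact (f_equal fst E). }
  assert (HBA : forall x, B (A x) = x).
  { intro x. pose proof (Hgf (x, 0)) as E. rewrite EA, EB in E. injection E. auto. }
  assert (HAB : forall y, A (B y) = y).
  { intro y. pose proof (Hfg (y, 0)) as E. rewrite EB, EA in E. injection E. auto. }
  destruct (heis_iso_param r s A B Hr Hs HA HB HBA HAB) as [<- [c [Hc1 [Hc2 Hc3]]]].
  split; [reflexivity|]. exists A, h0, e, c. repeat split; auto.
  intro h. pose proof (f_equal f (sd_delta_conj r (lab_S i r) (lab_T i r) h)) as E.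
  change (sdmul r (lab_S i r) (lab_T i r)) with (Lgrp i r) in E.
  rewrite !Hf, Ef1, !EA in E. unfold Lgrp in E. cbn [sdmul iterZ] in E. exact (f_equal fst E).
Qed.

Definition mat2_trace (m : mat2) : Z := let '(a, _, _, d) := m in a + d.

Lemma mat2_trace_conj N X M : mat2_mul N X = mat2_mul X M -> mat2_det X <> 0 ->
  mat2_trace N = mat2_trace M.
Proof.
  intros E Hd.
  assert (Id : mat2_det X * (mat2_trace N - mat2_trace M) =
               mat2_trace (mat2_mul (mat2_mul N X) (mat2_adj X)) -
               mat2_trace (mat2_mul (mat2_mul X M) (mat2_adj X))).
  { destruct N as [[[? ?] ?] ?], X as [[[? ?] ?] ?], M as [[[? ?] ?] ?]. cbn. ring. }
  rewrite E, Z.sub_diag in Id. apply Z.mul_eq_0 in Id. lia.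
Qed.

Definition lab_trace (i : lab) : Z :=
  match i with L1 => 2 | L2 | L2p => -2 | L3 | L3p => -1 | L4 | L4p => 0 | L6 => 1 end.

Lemma lab_iter_lin_trace i r e : e = 1 \/ e = -1 ->
  hhom r r (iterZ (lab_S i r) (lab_T i r) e) /\ iterZ (lab_S i r) (lab_T i r) e ga = ga /\
  mat2_trace (lin (iterZ (lab_S i r) (lab_T i r) e)) = lab_trace i.
Proof.
  intro He. split; [exact (iterZ_hom r _ _ e (lab_haut i r))|].
  destruct He as [-> | ->];
    [change (iterZ (lab_S i r) (lab_T i r) 1) with (lab_S i r); rewrite lab_S_eq
    |change (iterZ (lab_S i r) (lab_T i r) (-1)) with (lab_T i r); rewrite lab_T_eq];
    rewrite phi_ga, lin_phi; (split; [reflexivity|]); destruct i; reflexivity.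
Qed.

Lemma conj_rel_trace i j r A h0 e c : hhom r r A -> A ga = (0, 0, c) -> mat2_det (lin A) = c ->
  (c = 1 \/ c = -1) -> (e = 1 \/ e = -1) -> conj_rel i j r A h0 e -> lab_trace i = lab_trace j.
Proof.
  intros HA Hg Hd Hc He R. set (U := iterZ (lab_S j r) (lab_T j r) e).
  destruct (lab_iter_lin_trace j r e He) as [HU [Ug Utr]]. fold U in HU, Ug, Utr.
  assert (Hlin : lin (fun h => U (A h)) = lin (fun h => A (lab_S i r h))).
  { assert (Hxy : forall h, hx (U (A h)) = hx (A (lab_S i r h)) /\ hy (U (A h)) = hy (A (lab_S i r h))).
    { intro h. pose proof (R h) as E. fold U in E.
      rewrite (triple_eta h0), (triple_eta (U (A h))), (triple_eta (A (lab_S i r h))), !hmul_triple in E.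
      injection E as E1 E2 _. split; lia. }
    unfold lin, sbar11, sbar12, sbar21, sbar22.
    destruct (Hxy al) as [-> ->], (Hxy be) as [-> ->]. reflexivity. }
  rewrite (lin_comp r r U A 1 HU Ug), (lin_comp r r A (lab_S i r) c HA Hg) in Hlin.
  rewrite lab_S_eq, lin_phi in Hlin. rewrite <- Utr. symmetry.
  replace (lab_trace i) with (mat2_trace (hx (lab_u i r), hx (lab_v i r), hy (lab_u i r), hy (lab_v i r)))
    by (destruct i; reflexivity).
  apply (mat2_trace_conj _ _ _ Hlin). rewrite Hd. destruct Hc as [-> | ->]; discriminate.
Qed.

(* Evaluated at alpha and beta, [conj_rel] becomes six polynomial equations in the entries of
   A and h0; for the pairs L^j, L^{j,+} a case split of these entries modulo 2 (resp. 3) shows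
   that they have no solution when r is even (resp. divisible by 3). *)
Ltac expand_conj_rel R HA Ag He :=
  lazymatch type of R with
  | conj_rel _ _ _ ?A ?h0 _ =>
    pose proof (R al) as Ra; pose proof (R be) as Rb; clear R;
    rewrite !lab_S_eq, phi_al in Ra; rewrite !lab_S_eq, phi_be in Rb; cbn [lab_u lab_v] in Ra, Rb;
    rewrite (hhom_triple _ _ _ _ _ _ HA), Ag in Ra; rewrite (hhom_triple _ _ _ _ _ _ HA), Ag in Rb;
    destruct (A al) as [[x1 x2] x3], (A be) as [[y1 y2] y3], h0 as [[p q] z];
    destruct He as [-> | ->]; cbn [iterZ Pos.iter] in Ra, Rb;
    rewrite ?lab_S_eq, ?lab_T_eq in Ra, Rb; cbn [lab_u lab_v] in Ra, Rb;
    unfold inv_u, inv_v in Ra, Rb; cbn [hx hy hz] in Ra, Rb;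
    rewrite ?phi_triple, ?hmul_triple, ?hpow_triple in Ra, Rb; cbn [hz] in Ra, Rb;
    rewrite ?phi_triple, ?hmul_triple, ?hpow_triple in Ra, Rb;
    rewrite ?tri_0, ?tri_1, ?tri_m1 in Ra, Rb;
    apply (f_equal (fun x => (hx x, hy x, hz x))) in Ra, Rb; cbn [hx hy hz] in Ra, Rb;
    apply pair_equal_spec in Ra as [[Ra1 Ra2]%pair_equal_spec Ra3];
    apply pair_equal_spec in Rb as [[Rb1 Rb2]%pair_equal_spec Rb3]
  end.

Ltac parity x := let k := fresh "k" in destruct (Z.Even_or_Odd x) as [[k ->]|[k ->]].

Lemma conj_rel_L2p_L2 r A h0 e c : Z.Even r -> hhom r r A -> A ga = (0, 0, c) ->
  (c = 1 \/ c = -1) -> mat2_det (lin A) = c -> (e = 1 \/ e = -1) -> ~ conj_rel L2p L2 r A h0 e.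
Proof.
  intros Hev HA Ag Hc Hd He R. unfold lin, sbar11, sbar12, sbar21, sbar22 in Hd.
  expand_conj_rel R HA Ag He; cbn [mat2_det hx hy] in Hd; destruct Hev as [rho ->];
    destruct Hc as [-> | ->]; parity x1; parity x2; parity y1; parity y2; lia.
Qed.

Lemma conj_rel_L4_L4p r A h0 e c : Z.Even r -> hhom r r A -> A ga = (0, 0, c) ->
  (c = 1 \/ c = -1) -> mat2_det (lin A) = c -> (e = 1 \/ e = -1) -> ~ conj_rel L4 L4p r A h0 e.
Proof.
  intros Hev HA Ag Hc Hd He R. unfold lin, sbar11, sbar12, sbar21, sbar22 in Hd.
  expand_conj_rel R HA Ag He; cbn [mat2_det hx hy] in Hd; destruct Hev as [rho ->];
    destruct Hc as [-> | ->]; parity x1; parity x2; parity y1; parity y2; lia.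
Qed.

Ltac residue x := let a := fresh "a" in let E := fresh "E" in
  destruct (residue3 x) as [a [E|[E|E]]]; subst x.

Lemma conj_rel_L3_L3p r A h0 e c : (3 | r) -> hhom r r A -> A ga = (0, 0, c) ->
  (c = 1 \/ c = -1) -> mat2_det (lin A) = c -> (e = 1 \/ e = -1) -> ~ conj_rel L3 L3p r A h0 e.
Proof.
  intros Hdv HA Ag Hc Hd He R. unfold lin, sbar11, sbar12, sbar21, sbar22 in Hd.
  expand_conj_rel R HA Ag He; cbn [mat2_det hx hy] in Hd; destruct Hdv as [rho ->];
    destruct Hc as [-> | ->]; residue x1; residue x2; residue y1; residue y2; lia.
Qed.

Lemma lab_eq_dec (i j : lab) : {i = j} + {i <> j}.
Proof. decide equality. Qed.

Lemma Lgrp_iso_inj i j r s : lab_valid i r -> lab_valid j s ->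
  iso (Lgrp i r) (Lgrp j s) -> i = j /\ r = s.
Proof.
  intros [Hr Vi] [Hs Vj] I.
  destruct (lab_eq_dec i L1) as [->|Hi], (lab_eq_dec j L1) as [->|Hj].
  - split; [reflexivity|]. exact (L1_param_eq r s Hr Hs I).
  - exfalso. exact (not_iso_Lgrp_L1 j s r Hj Hs (iso_sym _ _ I)).
  - exfalso. exact (not_iso_Lgrp_L1 i r s Hi Hr I).
  - destruct (iso_Lgrp_structure i j r s Hi Hj Hr Hs I)
      as [<- [A [h0 [e [c [HA [Ag [Hc [Hd [He R]]]]]]]]]].
    destruct (iso_Lgrp_structure j i r r Hj Hi Hr Hr (iso_sym _ _ I))
      as [_ [A' [h0' [e' [c' [HA' [Ag' [Hc' [Hd' [He' R']]]]]]]]]].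
    pose proof (conj_rel_trace i j r A h0 e c HA Ag Hd Hc He R) as Htr.
    split; [|reflexivity].
    destruct i, j; cbn in Htr; try discriminate; try reflexivity; exfalso; cbn in Vi, Vj.
    + exact (conj_rel_L2p_L2 r A' h0' e' c' Vj HA' Ag' Hc' Hd' He' R').
    + exact (conj_rel_L2p_L2 r A h0 e c Vi HA Ag Hc Hd He R).
    + exact (conj_rel_L3_L3p r A h0 e c Vj HA Ag Hc Hd He R).
    + exact (conj_rel_L3_L3p r A' h0' e' c' Vi HA' Ag' Hc' Hd' He' R').
    + exact (conj_rel_L4_L4p r A h0 e c Vj HA Ag Hc Hd He R).
    + exact (conj_rel_L4_L4p r A' h0' e' c' Vi HA' Ag' Hc' Hd' He' R').
Qed.

Theorem proposition4p3 :
  (forall (i : lab) (r : Z), lab_valid i r -> osc_data r (lab_S i r) (lab_T i r)) /\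
  (forall (i j : lab) (r s : Z), lab_valid i r -> lab_valid j s ->
     iso (Lgrp i r) (Lgrp j s) -> i = j /\ r = s) /\
  (forall (r : Z) (S T : H -> H), osc_data r S T ->
     exists (i : lab) (s : Z), lab_valid i s /\ iso (sdmul r S T) (Lgrp i s)) /\
  (forall (r k l : Z) (S T : H -> H),
     (0 < r)%Z -> haut r S T -> S ga = ga ->
     (* (i) *)
     (S al = (1, 0, k)%Z -> S be = (0, 1, l)%Z ->
        iso (sdmul r S T) (Lgrp L1 (Z.gcd (Z.gcd r k) l))) /\
     (* (ii) *)
     (S al = (-1, 0, k)%Z -> S be = (0, -1, l)%Z ->
        ((Z.Odd r \/ (Z.Even k /\ Z.Even l)) -> iso (sdmul r S T) (Lgrp L2 r)) /\
        (~ (Z.Odd r \/ (Z.Even k /\ Z.Even l)) -> iso (sdmul r S T) (Lgrp L2p r))) /\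
     (* (iii) *)
     (S al = (0, 1, k)%Z -> S be = (-1, -1, l)%Z ->
        ((~ (3 | r)%Z \/ k mod 3 = l mod 3)%Z -> iso (sdmul r S T) (Lgrp L3 r)) /\
        (~ (~ (3 | r)%Z \/ k mod 3 = l mod 3)%Z -> iso (sdmul r S T) (Lgrp L3p r))) /\
     (* (iv) *)
     (S al = (0, 1, k)%Z -> S be = (-1, 0, l)%Z ->
        ((Z.Odd r \/ k mod 2 = l mod 2)%Z -> iso (sdmul r S T) (Lgrp L4 r)) /\
        (~ (Z.Odd r \/ k mod 2 = l mod 2)%Z -> iso (sdmul r S T) (Lgrp L4p r))) /\
     (* (v) *)
     (S al = (1, 1, k)%Z -> S be = (-1, 0, l)%Z ->
        iso (sdmul r S T) (Lgrp L6 r))).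
Proof.
  split; [exact lab_osc_data|]. split; [exact Lgrp_iso_inj|]. split; [exact osc_classified|].
  intros r k l S T Hr Ha Hg. split; [|split; [|split; [|split]]]; intros E1 E2.
  - exact (normal_form_I r k l S T Ha Hg E1 E2 Hr).
  - exact (normal_form_S2 r k l S T Ha Hg E1 E2).
  - exact (normal_form_S3 r k l S T Ha Hg E1 E2).
  - exact (normal_form_S4 r k l S T Ha Hg E1 E2).
  - exact (normal_form_S6 r k l S T Ha Hg E1 E2).
Qed.
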